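(* Let the models $S_m$, $m\in I_n$, the penalty $\mathrm{pen}(m)=\theta D_m/(4n)$ with a fixed $\theta>1$, the selected index $\widehat m$ and the truncated estimator $\tilde F_{\widehat m}$ be as in the context, and assume that the collections $\mathcal M_n^{(1)},\mathcal M_n^{(2)}$ satisfy assumption (H). Then there exist constants $C_1,C_2>0$, not depending on $n$, on $F$ or on the design, such that almost surely $$\mathbb{E}\left[\|\tilde F_{\widehat m}-F\|_n^2\,\middle|\,\mathbf X,\mathbf T\right]\le C_1\inf_{m\in I_n}\left\{\inf_{t\in S_m}\|F-t\|_n^2+\mathrm{pen}(m)\right\}+\frac{C_2}{n}.$$ (The constants may depend on $\theta$ and on the constants appearing in (H).) In particular the bound holds for any fixed (deterministic) design $(X_i,T_i)_{i\le n}$.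
   Context: Observation model: $(X_i,Y_i,T_i)_{i=1,\dots,n}$ are i.i.d., $Y_i,T_i>0$, and $Y_i$ is independent of $T_i$ conditionally on $X_i$. One observes only $(X_i,T_i,\delta_i)_{i=1,\dots,n}$ with $\delta_i=\mathbf 1_{\{Y_i\le T_i\}}$. The target is the conditional c.d.f. $F(x,y)=\mathbb P[Y\le y\mid X=x]$, so that $\mathbb E[\delta_i\mid X_i,T_i]=F(X_i,T_i)$. Let $A=A_1\times A_2\subset\mathbb R\times\mathbb R^+$ with $A_1,A_2$ compact intervals; convention: all design points $(X_i,T_i)$ lie in $A$ and functions are considered on $A$. Write $\mathbf X=(X_1,\dots,X_n)$, $\mathbf T=(T_1,\dots,T_n)$. Empirical norm: $\|t\|_n^2=\frac1n\sum_{i=1}^n t^2(X_i,T_i)$. Models: for $j=1,2$, $\mathcal M_n^{(j)}=\{S^{(j)}_{m_j}, m_j\in I_n^{(j)}\}$ is a collection of finite-dimensional linear subspaces of $L^2(A_j)$, $\dim S^{(j)}_{m_j}=D^{(j)}_{m_j}$, with orthonormal bases $(\phi^{m_1}_k)_{k\le D^{(1)}_{m_1}}$ of $S^{(1)}_{m_1}$ and $(\psi^{m_2}_l)_{l\le D^{(2)}_{m_2}}$ of $S^{(2)}_{m_2}$. For $m=(m_1,m_2)\in I_n=I_n^{(1)}\times I_n^{(2)}$, $S_m=S^{(1)}_{m_1}\otimes S^{(2)}_{m_2}=\{t(x,y)=\sum_{k,l}a_{k,l}\phi^{m_1}_k(x)\psi^{m_2}_l(y)\}$, of dimension $D_m=D^{(1)}_{m_1}D^{(2)}_{m_2}$.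 Assumption (H): for $j=1,2$ and every $b>0$ there is a constant $B_j$ (depending on $b$) with $\sum_{m_j\in I_n^{(j)}}\exp(-b\sqrt{D^{(j)}_{m_j}})\le B_j$ for all $n\ge1$. Estimators: contrast $\gamma_n(t)=\frac1n\sum_{i=1}^n(\delta_i-t(X_i,T_i))^2$; $\widehat F_m\in\arg\min_{t\in S_m}\gamma_n(t)$ (any minimizer; its values at the design points are uniquely determined); $\mathrm{pen}(m)=\frac{\theta}{4}\frac{D_m}{n}$ with a fixed $\theta>1$; $\widehat m\in\arg\min_{m\in I_n}[\gamma_n(\widehat F_m)+\mathrm{pen}(m)]$; and $\tilde F_m(x,u)=\min(\max(\widehat F_m(x,u),0),1)$ (truncation to $[0,1]$). *)

From Stdlib Require Import Reals List Lra.
Open Scope R_scope.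

Fixpoint rsum (n : nat) (f : nat -> R) : R :=
  match n with O => 0 | S k => rsum k f + f k end.

Fixpoint rprod (n : nat) (f : nat -> R) : R :=
  match n with O => 1 | S k => rprod k f * f k end.

(* all boolean vectors of length n (the possible values of (delta_1..delta_n)) *)
Fixpoint all_bools (n : nat) : list (list bool) :=
  match n with
  | O => nil :: nil
  | S k => map (cons true) (all_bools k) ++ map (cons false) (all_bools k)
  end.

Definition delta (d : list bool) (i : nat) : R := if nth i d false then 1 else 0.

Definition emp_norm2 (n : nat) (x t : nat -> R) (g : R -> R -> R) : R :=
  / INR n * rsum n (fun i => (g (x i) (t i)) ^ 2).

Definition gamma_n (n : nat) (x t : nat -> R) (d : list bool) (g : R -> R -> R) : R :=
  / INR n * rsum n (fun i => (delta d i - g (x i) (t i)) ^ 2).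

Definition clip01 (r : R) : R := Rmin (Rmax r 0) 1.

Definition lin_indep_on (P : R -> Prop) (D : nat) (phi : nat -> R -> R) : Prop :=
  forall c : nat -> R,
    (forall u, P u -> rsum D (fun k => c k * phi k u) = 0) ->
    forall k, (k < D)%nat -> c k = 0.

Definition in_tensor_span (A1 A2 : R -> Prop) (D1 D2 : nat)
    (phi psi : nat -> R -> R) (g : R -> R -> R) : Prop :=
  exists a : nat -> nat -> R,
    forall u v, A1 u -> A2 v ->
      g u v = rsum D1 (fun k => rsum D2 (fun l => a k l * phi k u * psi l v)).

(* Assumption (H) for one collection: sum_{m} exp(-b sqrt D_m) <= B b,
   the (possibly infinite) sum of nonnegative terms being the sup of finite partial sums *)
Definition assumption_H (I : Type) (D : I -> nat) (B : R -> R) : Prop :=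
  forall b, 0 < b ->
    forall l : list I, NoDup l ->
      fold_right (fun m acc => exp (- b * sqrt (INR (D m))) + acc) 0 l <= B b.

Definition cond_cdf (F : R -> R -> R) : Prop :=
  forall u,
    (forall y, 0 <= F u y <= 1) /\
    (forall y z, y <= z -> F u y <= F u z) /\
    (forall y, y <= 0 -> F u y = 0) /\
    (forall y eps, 0 < eps -> exists dl, 0 < dl /\
        forall z, y <= z < y + dl -> F u z - F u y < eps) /\
    (forall eps, 0 < eps -> exists M, forall y, M < y -> 1 - eps < F u y).

(* conditional probability of the indicator vector d given the design:
   delta_i independent Bernoulli(p i) *)
Definition bern_prob (n : nat) (p : nat -> R) (d : list bool) : R :=
  rprod n (fun i => if nth i d false then p i else 1 - p i).

Definition cond_exp (n : nat) (p : nat -> R) (L : list bool -> R) : R :=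
  fold_right (fun d acc => bern_prob n p d * L d + acc) 0 (all_bools n).

From Stdlib Require Import Reals List Lra Lia Classical IndefiniteDescription FunctionalExtensionality.
Open Scope R_scope.

(** Given the design, the observations [delta_i] are independent
    Bernoulli([F(X_i,T_i)]) variables, so every expectation below is the
    finite average [cond_exp] over the [2^n] outcomes.  Fix a reference
    model [m] and a competitor [g] in [S_m].  For each outcome, the selected
    estimator [Fhat_mhat] and [g] lie in the span of an orthonormal basis
    (at the design points) of [S_m + S_mhat]; expanding the squares in the
    selection inequality shows that the risk of the truncated estimator is
    at most that of [g] plus the penalty, plus the excess of the projected
    noise energy [|P eps|^2] over [(1 + eta) dim / 4] ([risk_bound_outcome]).
    That excess has exponentially small expectation in [sqrt dim]
    ([excess_tail]): the diagonal part of the quadratic form is a sum of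
    independent bounded terms, and the off-diagonal part is decoupled and
    handled by a Hoeffding inequality with predictable weights.  Summing over
    all pairs of models and using assumption (H) bounds the expected excess
    of the data-dependent pair ([selected_excess_bound]), which gives the
    theorem with explicit constants [C1_of theta] and [C2_of theta B1 B2]. *)

Lemma rsum_ext n f g : (forall i, (i < n)%nat -> f i = g i) -> rsum n f = rsum n g.
Proof. induction n; simpl; intros H; auto. rewrite IHn by (intros; apply H; lia). rewrite H by lia; auto. Qed.

Lemma rsum_le n f g : (forall i, (i < n)%nat -> f i <= g i) -> rsum n f <= rsum n g.
Proof.
  induction n; simpl; intros H; [lra|].
  pose proof (H n ltac:(lia)). pose proof (IHn ltac:(intros; apply H; lia)). lra.
Qed.

Lemma rsum_zero n : rsum n (fun _ => 0) = 0.
Proof. induction n; simpl; auto. rewrite IHn; lra. Qed.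

Lemma rsum_nonneg n f : (forall i, (i < n)%nat -> 0 <= f i) -> 0 <= rsum n f.
Proof. intros H. rewrite <- (rsum_zero n). apply rsum_le; auto. Qed.

Lemma rsum_plus n f g : rsum n (fun i => f i + g i) = rsum n f + rsum n g.
Proof. induction n; simpl; [lra|]. rewrite IHn; lra. Qed.

Lemma rsum_minus n f g : rsum n (fun i => f i - g i) = rsum n f - rsum n g.
Proof. induction n; simpl; [lra|]. rewrite IHn; lra. Qed.

Lemma rsum_scal n c f : rsum n (fun i => c * f i) = c * rsum n f.
Proof. induction n; simpl; [lra|]. rewrite IHn; lra. Qed.

Lemma rsum_scal_r n c f : rsum n (fun i => f i * c) = rsum n f * c.
Proof. induction n; simpl; [lra|]. rewrite IHn; lra. Qed.

Lemma rsum_const n c : rsum n (fun _ => c) = INR n * c.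
Proof. induction n; simpl rsum; [simpl; lra|]. rewrite IHn, S_INR. lra. Qed.

Lemma rsum_shift n f : rsum (S n) f = f 0%nat + rsum n (fun i => f (S i)).
Proof. induction n; simpl in *; [lra|]. rewrite IHn. lra. Qed.

Lemma rsum_swap n m f :
  rsum n (fun i => rsum m (fun j => f i j)) = rsum m (fun j => rsum n (fun i => f i j)).
Proof. induction n; simpl. - rewrite rsum_zero; auto. - rewrite IHn, <- rsum_plus. auto. Qed.

Lemma rsum_delta n k c :
  (k < n)%nat -> rsum n (fun l => c l * (if Nat.eqb k l then 1 else 0)) = c k.
Proof.
  induction n; intros Hk; [lia|]. simpl. destruct (Nat.eq_dec k n).
  - subst. rewrite Nat.eqb_refl, (rsum_ext _ _ (fun _ => 0)), rsum_zero; [lra|].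
    intros i Hi. destruct (Nat.eqb_spec n i); [lia|]; lra.
  - rewrite IHn by lia. destruct (Nat.eqb_spec k n); [lia|]; lra.
Qed.

Lemma rsum_square n a : (rsum n a) ^ 2 = rsum n (fun i => rsum n (fun j => a i * a j)).
Proof.
  replace ((rsum n a) ^ 2) with (rsum n a * rsum n a) by ring.
  rewrite <- rsum_scal_r. apply rsum_ext; intros i _. rewrite <- rsum_scal. auto.
Qed.

Lemma rsum_split_diag n h i :
  (i < n)%nat -> rsum n h = h i + rsum n (fun j => if Nat.eqb i j then 0 else h j).
Proof.
  intros Hi. rewrite <- (rsum_delta n i h Hi), <- rsum_plus.
  apply rsum_ext; intros j _. destruct (Nat.eqb i j); lra.
Qed.

Lemma rsum_le_term n f i :
  (i < n)%nat -> (forall j, (j < n)%nat -> 0 <= f j) -> f i <= rsum n f.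
Proof.
  intros Hi H. rewrite (rsum_split_diag n f i Hi).
  enough (0 <= rsum n (fun j => if Nat.eqb i j then 0 else f j)) by lra.
  apply rsum_nonneg. intros j Hj; destruct (Nat.eqb i j); [lra| auto].
Qed.

Definition dot (n : nat) (u v : nat -> R) : R := rsum n (fun i => u i * v i).

Definition lin_comb (d : nat) (c : nat -> R) (e : nat -> nat -> R) : nat -> R :=
  fun i => rsum d (fun k => c k * e k i).

Definition orthonormal (n d : nat) (e : nat -> nat -> R) : Prop :=
  forall k l, (k < d)%nat -> (l < d)%nat ->
    dot n (e k) (e l) = if Nat.eqb k l then 1 else 0.

Definition in_span (n d : nat) (e : nat -> nat -> R) (v : nat -> R) : Prop :=
  exists c, forall i, (i < n)%nat -> v i = lin_comb d c e i.

Lemma dot_sym n u v : dot n u v = dot n v u.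
Proof. unfold dot; apply rsum_ext; intros; ring. Qed.

Lemma dot_nonneg n u : 0 <= dot n u u.
Proof. apply rsum_nonneg; intros; nra. Qed.

Lemma dot_minus_l n u v w : dot n (fun i => u i - v i) w = dot n u w - dot n v w.
Proof. unfold dot. rewrite <- rsum_minus. apply rsum_ext; intros; ring. Qed.

Lemma dot_lin_comb_l n d c e u :
  dot n (lin_comb d c e) u = rsum d (fun k => c k * dot n (e k) u).
Proof.
  unfold dot, lin_comb.
  rewrite (rsum_ext n _ (fun i => rsum d (fun k => c k * e k i * u i))).
  - rewrite rsum_swap. apply rsum_ext; intros k _.
    rewrite <- rsum_scal. apply rsum_ext; intros; ring.
  - intros i _. rewrite <- rsum_scal_r. auto.
Qed.

Lemma dot_lin_comb_coord n d c e l :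
  orthonormal n d e -> (l < d)%nat -> dot n (e l) (lin_comb d c e) = c l.
Proof.
  intros Ho Hl. rewrite dot_sym, dot_lin_comb_l, <- (rsum_delta d l c Hl).
  apply rsum_ext; intros k Hk. rewrite dot_sym, Ho by auto.
  destruct (Nat.eqb_spec l k), (Nat.eqb_spec k l); try lia; ring.
Qed.

Lemma sqnorm_lin_comb n d c e :
  orthonormal n d e -> dot n (lin_comb d c e) (lin_comb d c e) = rsum d (fun k => c k ^ 2).
Proof.
  intros Ho. rewrite dot_lin_comb_l. apply rsum_ext; intros k Hk.
  rewrite dot_lin_comb_coord; auto; ring.
Qed.

Lemma sqnorm_diff n u w :
  dot n (fun i => u i - w i) (fun i => u i - w i) = dot n u u - 2 * dot n w u + dot n w w.
Proof. unfold dot. rewrite <- rsum_scal, <- rsum_minus, <- rsum_plus. apply rsum_ext; intros; ring. Qed.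

Lemma bessel n d e u :
  orthonormal n d e -> rsum d (fun k => (dot n (e k) u) ^ 2) <= dot n u u.
Proof.
  intros Ho. set (c := fun k => dot n (e k) u).
  pose proof (dot_nonneg n (fun i => u i - lin_comb d c e i)) as P.
  rewrite sqnorm_diff, sqnorm_lin_comb, dot_lin_comb_l in P by auto.
  assert (E : rsum d (fun k => c k * dot n (e k) u) = rsum d (fun k => c k ^ 2))
    by (apply rsum_ext; intros; unfold c; ring).
  rewrite E in P. change (rsum d (fun k => c k ^ 2) <= dot n u u). lra.
Qed.

Lemma sumsq_zero n a :
  rsum n (fun i => a i * a i) = 0 -> forall i, (i < n)%nat -> a i = 0.
Proof.
  intros H i Hi. assert (a i * a i <= rsum n (fun i => a i * a i)).
  { apply (rsum_le_term n (fun i => a i * a i)); auto; intros; nra. }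
  nra.
Qed.

Lemma in_span_ext n d e v v' :
  (forall i, (i < n)%nat -> v i = v' i) -> in_span n d e v -> in_span n d e v'.
Proof. intros H [c Hc]; exists c; intros; rewrite <- H; auto. Qed.

Lemma in_span_plus n d e u v :
  in_span n d e u -> in_span n d e v -> in_span n d e (fun i => u i + v i).
Proof.
  intros [c Hc] [c' Hc']; exists (fun k => c k + c' k); intros i Hi.
  rewrite Hc, Hc' by auto. unfold lin_comb. rewrite <- rsum_plus. apply rsum_ext; intros; ring.
Qed.

Lemma in_span_scal n d e a u : in_span n d e u -> in_span n d e (fun i => a * u i).
Proof.
  intros [c Hc]; exists (fun k => a * c k); intros i Hi.
  rewrite Hc by auto. unfold lin_comb. rewrite <- rsum_scal. apply rsum_ext; intros; ring.
Qed.

Lemma in_span_zero n d e : in_span n d e (fun _ => 0).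
Proof.
  exists (fun _ => 0); intros; unfold lin_comb.
  rewrite (rsum_ext _ _ (fun _ => 0)), rsum_zero; auto. intros; ring.
Qed.

Lemma in_span_rsum n d e m (f : nat -> nat -> R) :
  (forall k, (k < m)%nat -> in_span n d e (f k)) -> in_span n d e (fun i => rsum m (fun k => f k i)).
Proof.
  induction m; intros H; simpl.
  - apply in_span_zero.
  - apply in_span_plus; [apply IHm; intros; apply H; lia | apply H; lia].
Qed.

Definition extend (d : nat) (e : nat -> nat -> R) (f : nat -> R) : nat -> nat -> R :=
  fun k => if Nat.eqb k d then f else e k.

Lemma lin_comb_extend d a e f i :
  lin_comb (S d) a (extend d e f) i = lin_comb d a e i + a d * f i.
Proof.
  unfold lin_comb, extend. simpl. rewrite Nat.eqb_refl. f_equal.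
  apply rsum_ext; intros k Hk. destruct (Nat.eqb_spec k d); [lia|auto].
Qed.

Lemma lin_comb_coeff_ext d a a' e :
  (forall k, (k < d)%nat -> a k = a' k) -> lin_comb d a e = lin_comb d a' e.
Proof. intros H. unfold lin_comb. apply functional_extensionality; intros i. apply rsum_ext; intros k Hk; rewrite H; auto. Qed.

Lemma gram_schmidt_step n d e v : orthonormal n d e ->
  exists d' e', (d' <= S d)%nat /\ orthonormal n d' e' /\
    (forall w, in_span n d e w -> in_span n d' e' w) /\ in_span n d' e' v.
Proof.
  intros Ho. set (c := fun k => dot n (e k) v).
  set (r := fun i => v i - lin_comb d c e i). set (s := dot n r r).
  assert (Hr : forall k, (k < d)%nat -> dot n (e k) r = 0).
  { intros k Hk. unfold r. rewrite dot_sym, dot_minus_l, (dot_sym n (lin_comb d c e)),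
      dot_lin_comb_coord by auto. unfold c; rewrite dot_sym; ring. }
  destruct (Req_dec s 0) as [Hs|Hs].
  - (* [v] already lies in the span: the residual vanishes *)
    exists d, e. repeat split; auto. exists c. intros i Hi.
    pose proof (sumsq_zero n r Hs i Hi). unfold r in H. lra.
  - (* normalise the residual and append it *)
    assert (Hsp : 0 < s) by (pose proof (dot_nonneg n r); fold s in H; lra).
    assert (Hsq : sqrt s * sqrt s = s) by (apply sqrt_sqrt; lra).
    assert (Hsq0 : 0 < sqrt s) by (apply sqrt_lt_R0; lra).
    set (f := fun i => r i / sqrt s).
    assert (Hf : forall k, (k < d)%nat -> dot n (e k) f = 0).
    { intros k Hk. unfold dot, f. rewrite (rsum_ext _ _ (fun i => / sqrt s * (e k i * r i))).
      - rewrite rsum_scal. fold (dot n (e k) r). rewrite Hr by lia; ring.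
      - intros; field; lra. }
    exists (S d), (extend d e f). split; [lia|]. split; [|split].
    + intros k l Hk Hl. unfold extend.
      destruct (Nat.eqb_spec k d), (Nat.eqb_spec l d), (Nat.eqb_spec k l); try lia.
      * unfold dot, f. rewrite (rsum_ext _ _ (fun i => / s * (r i * r i))).
        -- rewrite rsum_scal. fold (dot n r r). fold s. field; lra.
        -- intros; replace (/ s) with (/ (sqrt s * sqrt s)) by (rewrite Hsq; auto); field; lra.
      * rewrite dot_sym; apply Hf; lia.
      * apply Hf; lia.
      * rewrite Ho by lia. destruct (Nat.eqb_spec k l); congruence.
      * rewrite Ho by lia. destruct (Nat.eqb_spec k l); congruence.
    + intros w [a Ha]. exists (fun k => if Nat.eqb k d then 0 else a k). intros i Hi.
      rewrite lin_comb_extend, Nat.eqb_refl, Ha by auto.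
      rewrite (lin_comb_coeff_ext d (fun k => if Nat.eqb k d then 0 else a k) a); [ring|].
      intros k Hk. destruct (Nat.eqb_spec k d); [lia|auto].
    + exists (fun k => if Nat.eqb k d then sqrt s else c k). intros i Hi.
      rewrite lin_comb_extend, Nat.eqb_refl.
      rewrite (lin_comb_coeff_ext d (fun k => if Nat.eqb k d then sqrt s else c k) c).
      * unfold f, r. field. lra.
      * intros k Hk. destruct (Nat.eqb_spec k d); [lia|auto].
Qed.

Lemma gram_schmidt n N (v : nat -> nat -> R) : exists d e,
  (d <= N)%nat /\ orthonormal n d e /\ forall j, (j < N)%nat -> in_span n d e (v j).
Proof.
  induction N.
  - exists 0%nat, (fun _ _ => 0). split; [lia| split; [intros k l Hk | intros j Hj]; lia].
  - destruct IHN as [d [e [Hd [Ho Hc]]]].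
    destruct (gram_schmidt_step n d e (v N) Ho) as [d' [e' [Hd' [Ho' [Hsub Hv]]]]].
    exists d', e'. repeat split; [lia| auto|]. intros j Hj.
    destruct (Nat.eq_dec j N) as [->|Hne]; auto. apply Hsub, Hc; lia.
Qed.

Lemma exp_le x y : x <= y -> exp x <= exp y.
Proof. intros [H|H]; [left; apply exp_increasing; auto| subst; lra]. Qed.

Lemma Rabs_le_inv x a : Rabs x <= a -> -a <= x <= a.
Proof. unfold Rabs; destruct (Rcase_abs x); lra. Qed.

Lemma exp_quad y : Rabs y <= /2 -> exp y <= 1 + y + 2 * y ^ 2.
Proof.
  intros Hy. pose proof (exp_ineq1_le (-y)) as H. rewrite exp_Ropp in H.
  pose proof (exp_pos y). apply Rabs_le_inv in Hy.
  assert (exp y * (1 - y) <= 1).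
  { apply (Rmult_le_compat_l (exp y)) in H; [|lra]. rewrite Rinv_r in H by lra. lra. }
  assert (1 <= (1 - y) * (1 + y + 2 * y ^ 2)) by nra.
  apply (Rmult_le_reg_r (1 - y)); nra.
Qed.

Lemma hoeffding_two_point p xT xF a :
  0 <= p <= 1 -> p * xT + (1 - p) * xF = 0 -> Rabs xT <= 1 -> Rabs xF <= 1 ->
  p * exp (a * xT) + (1 - p) * exp (a * xF) <= exp (2 * a ^ 2).
Proof.
  intros Hp H0 HT HF.
  apply Rabs_le_inv in HT; apply Rabs_le_inv in HF.
  destruct (Rle_dec (Rabs a) (/2)) as [Ha|Ha].
  - (* small [a]: second-order expansion, the linear term has mean zero *)
    apply Rabs_le_inv in Ha.
    assert (ET : exp (a * xT) <= 1 + a * xT + 2 * (a * xT) ^ 2)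
      by (apply exp_quad, Rabs_le; nra).
    assert (EF : exp (a * xF) <= 1 + a * xF + 2 * (a * xF) ^ 2)
      by (apply exp_quad, Rabs_le; nra).
    pose proof (exp_ineq1_le (2 * a ^ 2)).
    assert (p * xT ^ 2 + (1 - p) * xF ^ 2 <= 1) by nra.
    assert (Hb : p * exp (a * xT) + (1 - p) * exp (a * xF)
                 <= 1 + a * (p * xT + (1 - p) * xF) + 2 * a ^ 2 * (p * xT ^ 2 + (1 - p) * xF ^ 2))
      by nra.
    rewrite H0 in Hb. nra.
  - (* large [a]: [a x <= |a| <= 2 a^2] pointwise *)
    assert (Hbig : forall x, -1 <= x <= 1 -> exp (a * x) <= exp (2 * a ^ 2)).
    { intros x Hx. apply exp_le. unfold Rabs in Ha. destruct (Rcase_abs a); nra. }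
    pose proof (Hbig xT HT). pose proof (Hbig xF HF). nra.
Qed.

Lemma Rmax0_le_exp y l : 0 < l -> Rmax y 0 <= exp (l * y) / l.
Proof.
  intros Hl. pose proof (exp_ineq1_le (l * y)). pose proof (exp_pos (l * y)).
  unfold Rmax; destruct (Rle_dec y 0).
  - apply Rlt_le, Rdiv_lt_0_compat; auto.
  - apply (Rmult_le_reg_r l); auto. unfold Rdiv. rewrite Rmult_assoc, Rinv_l by lra. nra.
Qed.

Lemma exp_average d t :
  (1 <= d)%nat -> exp (rsum d t / INR d) <= rsum d (fun k => exp (t k)) / INR d.
Proof.
  intros Hd. assert (HdR : 0 < INR d) by (apply lt_0_INR; lia).
  set (m := rsum d t / INR d).
  assert (H : rsum d (fun k => exp m * (1 + (t k - m))) <= rsum d (fun k => exp (t k))).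
  { apply rsum_le; intros k _. replace (t k) with (m + (t k - m)) at 2 by ring.
    rewrite exp_plus. apply Rmult_le_compat_l; [left; apply exp_pos| apply exp_ineq1_le]. }
  rewrite rsum_scal, rsum_plus, rsum_minus, !rsum_const in H.
  assert (INR d * m = rsum d t) by (unfold m; field; lra).
  apply (Rmult_le_reg_r (INR d)); auto. unfold Rdiv. rewrite Rmult_assoc, Rinv_l by lra. nra.
Qed.

Lemma geometric_sum_le N r : 0 <= r < 1 -> rsum N (fun k => r ^ k) <= / (1 - r).
Proof.
  intros Hr. assert (H : rsum N (fun k => r ^ k) * (1 - r) = 1 - r ^ N).
  { induction N; simpl; [ring|]. rewrite Rmult_plus_distr_r, IHN. simpl. ring. }
  assert (0 <= r ^ N) by (apply pow_le; lra).
  apply (Rmult_le_reg_r (1 - r)); [lra|]. rewrite H, Rinv_l by lra. lra.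
Qed.

Lemma exp_INR_mult k x : exp (INR k * x) = exp x ^ k.
Proof.
  induction k.
  - simpl; rewrite Rmult_0_l, exp_0; auto.
  - rewrite S_INR, Rmult_plus_distr_r, Rmult_1_l, exp_plus, IHk. simpl. ring.
Qed.

Lemma floor_exists (y : R) (K : nat) :
  0 <= y -> y < INR K + 1 -> exists k, (k <= K)%nat /\ INR k <= y < INR k + 1.
Proof.
  induction K; intros H0 H1.
  - exists 0%nat; simpl in *; split; [lia|lra].
  - destruct (Rlt_dec y (INR K + 1)) as [Hlt|Hge].
    + destruct (IHK H0 Hlt) as [k [Hk Hk2]]. exists k; split; [lia|auto].
    + exists (S K). split; [lia|]. rewrite S_INR in *. lra.
Qed.

Lemma young a b al : 0 < al -> 2 * a * b <= al * a ^ 2 + b ^ 2 / al.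
Proof.
  intros H. assert (0 <= al * (a - b / al) ^ 2) by (apply Rmult_le_pos; [lra| apply pow2_ge_0]).
  replace (al * (a - b / al) ^ 2) with (al * a ^ 2 - 2 * a * b + b ^ 2 / al) in H0 by (field; lra).
  lra.
Qed.

Definition probs (p : nat -> R) : Prop := forall i, 0 <= p i <= 1.

Definition lsum {A : Type} (l : list A) (f : A -> R) : R :=
  fold_right (fun a acc => f a + acc) 0 l.

Lemma lsum_app {A} (l1 l2 : list A) h : lsum (l1 ++ l2) h = lsum l1 h + lsum l2 h.
Proof. induction l1; simpl; [lra|]. rewrite IHl1; lra. Qed.

Lemma lsum_map {A B} (l : list A) (g : A -> B) h : lsum (map g l) h = lsum l (fun a => h (g a)).
Proof. induction l; simpl; auto. rewrite IHl; auto. Qed.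

Lemma lsum_plus {A} (l : list A) h1 h2 : lsum l (fun a => h1 a + h2 a) = lsum l h1 + lsum l h2.
Proof. induction l; simpl; [lra|]. rewrite IHl; lra. Qed.

Lemma lsum_scal {A} (l : list A) c h : lsum l (fun a => c * h a) = c * lsum l h.
Proof. induction l; simpl; [lra|]. rewrite IHl; lra. Qed.

Lemma lsum_ext {A} (l : list A) h1 h2 : (forall a, h1 a = h2 a) -> lsum l h1 = lsum l h2.
Proof. intros H; induction l; simpl; [lra|]. rewrite H, IHl; lra. Qed.

Lemma lsum_le_in {A} (l : list A) h1 h2 :
  (forall a, In a l -> h1 a <= h2 a) -> lsum l h1 <= lsum l h2.
Proof.
  intros H; induction l; simpl; [lra|].
  pose proof (H a (or_introl eq_refl)). pose proof (IHl (fun b Hb => H b (or_intror Hb))). lra.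
Qed.

Lemma lsum_le {A} (l : list A) h1 h2 : (forall a, h1 a <= h2 a) -> lsum l h1 <= lsum l h2.
Proof. intros H; apply lsum_le_in; auto. Qed.

Lemma lsum_nonneg {A} (l : list A) f : (forall a, 0 <= f a) -> 0 <= lsum l f.
Proof. intros H; induction l; simpl; [lra|]. specialize (H a); lra. Qed.

Lemma lsum_le_term {A} (l : list A) f a : (forall a, 0 <= f a) -> In a l -> f a <= lsum l f.
Proof.
  intros H Hin; induction l; simpl in *; [contradiction|]. destruct Hin as [<-|Hin].
  - pose proof (lsum_nonneg l f H); lra.
  - specialize (IHl Hin); specialize (H a0); lra.
Qed.

Lemma lsum_swap {A B} (l1 : list A) (l2 : list B) G :
  lsum l1 (fun a => lsum l2 (fun b => G a b)) = lsum l2 (fun b => lsum l1 (fun a => G a b)).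
Proof.
  induction l1; simpl.
  - induction l2; simpl; auto. rewrite <- IHl2; lra.
  - rewrite IHl1, <- lsum_plus. auto.
Qed.

Lemma lsum_prod {A B} (l1 : list A) (l2 : list B) f g :
  lsum l1 (fun a => lsum l2 (fun b => f a * g b)) = lsum l1 f * lsum l2 g.
Proof. induction l1; simpl; [lra|]. rewrite IHl1, lsum_scal. ring. Qed.

Lemma ce_lsum_form n p L :
  cond_exp n p L = lsum (all_bools n) (fun d => bern_prob n p d * L d).
Proof. reflexivity. Qed.

Lemma bern_prob_nonneg n p d : probs p -> 0 <= bern_prob n p d.
Proof.
  intros Hp. unfold bern_prob. induction n; simpl; [lra|].
  apply Rmult_le_pos; auto. destruct (nth n d false); specialize (Hp n); lra.
Qed.

Lemma rprod_shift n f : rprod (S n) f = f 0%nat * rprod n (fun i => f (S i)).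
Proof. induction n; simpl in *; [lra|]. rewrite IHn; lra. Qed.

Lemma ce_0 p L : cond_exp 0 p L = L nil.
Proof. unfold cond_exp, bern_prob; simpl. ring. Qed.

Lemma ce_S n p L : cond_exp (S n) p L =
  p 0%nat * cond_exp n (fun i => p (S i)) (fun d => L (true :: d)) +
  (1 - p 0%nat) * cond_exp n (fun i => p (S i)) (fun d => L (false :: d)).
Proof.
  rewrite !ce_lsum_form. simpl all_bools. rewrite lsum_app, !lsum_map, <- !lsum_scal.
  f_equal; apply lsum_ext; intros d; unfold bern_prob; rewrite rprod_shift; simpl; ring.
Qed.

Lemma ce_ext n p L1 L2 : (forall d, L1 d = L2 d) -> cond_exp n p L1 = cond_exp n p L2.
Proof. intros H; rewrite !ce_lsum_form; apply lsum_ext; intros; rewrite H; auto. Qed.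

Lemma ce_plus n p L1 L2 :
  cond_exp n p (fun d => L1 d + L2 d) = cond_exp n p L1 + cond_exp n p L2.
Proof. rewrite !ce_lsum_form, <- lsum_plus. apply lsum_ext; intros; ring. Qed.

Lemma ce_scal n p c L : cond_exp n p (fun d => c * L d) = c * cond_exp n p L.
Proof. rewrite !ce_lsum_form, <- lsum_scal. apply lsum_ext; intros; ring. Qed.

Lemma ce_const n p c : cond_exp n p (fun _ => c) = c.
Proof. revert p; induction n; intros p; [rewrite ce_0; auto| rewrite ce_S, !IHn; ring]. Qed.

Lemma ce_minus n p L1 L2 :
  cond_exp n p (fun d => L1 d - L2 d) = cond_exp n p L1 - cond_exp n p L2.
Proof.
  rewrite (ce_ext n p _ (fun d => L1 d + (-1) * L2 d)) by (intros; ring).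
  rewrite ce_plus, ce_scal; ring.
Qed.

Lemma ce_rsum n p K (f : nat -> list bool -> R) :
  cond_exp n p (fun d => rsum K (fun k => f k d)) = rsum K (fun k => cond_exp n p (f k)).
Proof. induction K; simpl; [apply ce_const| rewrite ce_plus, IHK; auto]. Qed.

Lemma ce_lsum {A} n p (l : list A) (F : A -> list bool -> R) :
  cond_exp n p (fun d => lsum l (fun a => F a d)) = lsum l (fun a => cond_exp n p (F a)).
Proof. induction l; simpl; [apply ce_const| rewrite ce_plus, IHl; auto]. Qed.

Lemma ce_le_in n p L1 L2 : probs p ->
  (forall d, In d (all_bools n) -> L1 d <= L2 d) -> cond_exp n p L1 <= cond_exp n p L2.
Proof.
  intros Hp H. rewrite !ce_lsum_form. apply lsum_le_in; intros d Hd.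
  apply Rmult_le_compat_l; [apply bern_prob_nonneg|]; auto.
Qed.

Lemma ce_le n p L1 L2 : probs p -> (forall d, L1 d <= L2 d) -> cond_exp n p L1 <= cond_exp n p L2.
Proof. intros Hp H; apply ce_le_in; auto. Qed.

Lemma ce_swap n m p q G :
  cond_exp n p (fun d => cond_exp m q (fun s => G d s)) =
  cond_exp m q (fun s => cond_exp n p (fun d => G d s)).
Proof.
  rewrite !ce_lsum_form.
  rewrite (lsum_ext _ _ (fun d => lsum (all_bools m) (fun s => bern_prob n p d * (bern_prob m q s * G d s)))).
  - rewrite lsum_swap. apply lsum_ext; intros s. rewrite ce_lsum_form, <- lsum_scal.
    apply lsum_ext; intros; ring.
  - intros d. rewrite ce_lsum_form, <- lsum_scal. auto.
Qed.

Lemma ce_jensen_exp n p L : probs p -> exp (cond_exp n p L) <= cond_exp n p (fun d => exp (L d)).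
Proof.
  intros Hp. set (m := cond_exp n p L).
  assert (H : forall d, exp m * (1 + (L d - m)) <= exp (L d)).
  { intros d. replace (L d) with (m + (L d - m)) at 2 by ring. rewrite exp_plus.
    apply Rmult_le_compat_l; [left; apply exp_pos| apply exp_ineq1_le]. }
  pose proof (ce_le n p _ _ Hp H) as H0.
  rewrite ce_scal, ce_plus, ce_const, ce_minus, ce_const in H0. fold m in H0. lra.
Qed.

Lemma ce_indicator n q j :
  (j < n)%nat -> cond_exp n q (fun s => if nth j s false then 1 else 0) = q j.
Proof.
  revert q j; induction n; intros q j Hj; [lia|]. rewrite ce_S. destruct j; simpl.
  - rewrite !ce_const; ring.
  - rewrite !IHn by lia. ring.
Qed.

Lemma ce_indicator_neg n q j :
  (j < n)%nat -> cond_exp n q (fun s => if negb (nth j s false) then 1 else 0) = 1 - q j.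
Proof.
  intros Hj. rewrite (ce_ext _ _ _ (fun s => 1 - (if nth j s false then 1 else 0))).
  - rewrite ce_minus, ce_const, ce_indicator; auto.
  - intros s; destruct (nth j s false); simpl; ring.
Qed.

Lemma ce_indicator_pair n q i j : (i < n)%nat -> (j < n)%nat ->
  cond_exp n q (fun s => if andb (nth i s false) (negb (nth j s false)) then 1 else 0) =
  if Nat.eqb i j then 0 else q i * (1 - q j).
Proof.
  revert q i j; induction n; intros q i j Hi Hj; [lia|]. rewrite ce_S. destruct i, j; simpl.
  - rewrite !ce_const; ring.
  - rewrite ce_indicator_neg, ce_const by lia. ring.
  - rewrite (ce_ext _ _ (fun s => if andb (nth i s false) false then 1 else 0) (fun _ => 0))
      by (intros; rewrite Bool.andb_false_r; auto).
    rewrite (ce_ext _ _ (fun s => if andb (nth i s false) true then 1 else 0)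
               (fun s => if nth i s false then 1 else 0)) by (intros; rewrite Bool.andb_true_r; auto).
    rewrite ce_indicator, ce_const by lia. ring.
  - rewrite !IHn by lia. destruct (Nat.eqb i j); ring.
Qed.

(** Coordinates [i] with [Sel i = true] carry centred noise [xi i (d_i)]
    bounded by [1]; the weights [w i] and the nonnegative factor [H] may
    depend on the outcome, but only through the unselected coordinates.
    Integrating out the selected coordinates one at a time with
    [hoeffding_two_point] gives the sub-Gaussian bound
    [E[H exp(sum_sel w_i xi_i)] <= E[H exp(2 sum_sel w_i^2)]].
    This is used both for plain linear forms and, after decoupling, for
    the off-diagonal part of quadratic forms. *)

Definition sel_sum (n : nat) (Sel : nat -> bool) (w : nat -> list bool -> R)
    (xi : nat -> bool -> R) (d : list bool) : R :=
  rsum n (fun i => if Sel i then w i d * xi i (nth i d false) else 0).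

Definition sel_sqsum (n : nat) (Sel : nat -> bool) (w : nat -> list bool -> R)
    (d : list bool) : R :=
  rsum n (fun i => if Sel i then (w i d) ^ 2 else 0).

Definition unselected_only (Sel : nat -> bool) (G : list bool -> R) : Prop :=
  forall d d', (forall j, Sel j = false -> nth j d false = nth j d' false) -> G d = G d'.

Definition centred_noise (p : nat -> R) (xi : nat -> bool -> R) : Prop :=
  (forall i, p i * xi i true + (1 - p i) * xi i false = 0) /\
  (forall i b, Rabs (xi i b) <= 1).

Lemma unselected_only_cons Sel G b :
  unselected_only Sel G -> unselected_only (fun i => Sel (S i)) (fun d => G (b :: d)).
Proof. intros HG d d' Hdd. apply HG. intros [|j] Hj; simpl; auto. Qed.

Lemma unselected_only_head Sel G d :
  Sel 0%nat = true -> unselected_only Sel G -> G (false :: d) = G (true :: d).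
Proof. intros H0 HG. apply HG. intros [|j] Hj; [congruence| auto]. Qed.

Lemma sel_sum_cons n Sel w xi b d :
  sel_sum (S n) Sel w xi (b :: d) =
  (if Sel 0%nat then w 0%nat (b :: d) * xi 0%nat b else 0) +
  sel_sum n (fun i => Sel (S i)) (fun i d => w (S i) (b :: d)) (fun i => xi (S i)) d.
Proof. unfold sel_sum. rewrite rsum_shift. auto. Qed.

Lemma sel_sqsum_cons n Sel w b d :
  sel_sqsum (S n) Sel w (b :: d) =
  (if Sel 0%nat then (w 0%nat (b :: d)) ^ 2 else 0) +
  sel_sqsum n (fun i => Sel (S i)) (fun i d => w (S i) (b :: d)) d.
Proof. unfold sel_sqsum. rewrite rsum_shift. auto. Qed.

(** Peeling a selected head coordinate: by independence from [d_0], the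
    factor [H] and all weights are those of the outcome [true :: d]. *)
Lemma selected_head_cons n Sel w xi H b d :
  Sel 0%nat = true -> unselected_only Sel H -> (forall i, unselected_only Sel (w i)) ->
  H (b :: d) = H (true :: d) /\
  sel_sum (S n) Sel w xi (b :: d) = w 0%nat (true :: d) * xi 0%nat b +
    sel_sum n (fun i => Sel (S i)) (fun i d => w (S i) (true :: d)) (fun i => xi (S i)) d /\
  sel_sqsum (S n) Sel w (b :: d) = w 0%nat (true :: d) ^ 2 +
    sel_sqsum n (fun i => Sel (S i)) (fun i d => w (S i) (true :: d)) d.
Proof.
  intros HS0 HHsel Hwsel. rewrite sel_sum_cons, sel_sqsum_cons, HS0.
  assert (Hw : forall i, w i (b :: d) = w i (true :: d)).
  { intros i; destruct b; [reflexivity| exact (unselected_only_head Sel (w i) d HS0 (Hwsel i))]. }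
  split; [destruct b; [reflexivity| exact (unselected_only_head Sel H d HS0 HHsel)]|].
  rewrite Hw. unfold sel_sum, sel_sqsum.
  split; f_equal; apply rsum_ext; intros i _; rewrite Hw; reflexivity.
Qed.

Lemma unselected_head_cons n Sel w xi b d : Sel 0%nat = false ->
  sel_sum (S n) Sel w xi (b :: d) =
    sel_sum n (fun i => Sel (S i)) (fun i d => w (S i) (b :: d)) (fun i => xi (S i)) d /\
  sel_sqsum (S n) Sel w (b :: d) = sel_sqsum n (fun i => Sel (S i)) (fun i d => w (S i) (b :: d)) d.
Proof. intros HS0. rewrite sel_sum_cons, sel_sqsum_cons, HS0, !Rplus_0_l. split; reflexivity. Qed.

Definition hoeffding_bound (n : nat) (p : nat -> R) (xi : nat -> bool -> R) : Prop :=
  forall Sel (w : nat -> list bool -> R) (H : list bool -> R),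
    (forall d, 0 <= H d) -> unselected_only Sel H -> (forall i, unselected_only Sel (w i)) ->
    cond_exp n p (fun d => H d * exp (sel_sum n Sel w xi d))
    <= cond_exp n p (fun d => H d * exp (2 * sel_sqsum n Sel w d)).

Section HoeffdingStep.
Variables (n : nat) (p : nat -> R) (xi : nat -> bool -> R).
Hypotheses (Hp : probs p) (Hxi : centred_noise p xi).
Hypothesis IH : hoeffding_bound n (fun i => p (S i)) (fun i => xi (S i)).
Variables (Sel : nat -> bool) (w : nat -> list bool -> R) (H : list bool -> R).
Hypotheses (HH : forall d, 0 <= H d) (HHsel : unselected_only Sel H)
  (Hwsel : forall i, unselected_only Sel (w i)).

Lemma hoeffding_step_unselected : Sel 0%nat = false ->
  cond_exp (S n) p (fun d => H d * exp (sel_sum (S n) Sel w xi d))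
  <= cond_exp (S n) p (fun d => H d * exp (2 * sel_sqsum (S n) Sel w d)).
Proof.
  intros HS0. rewrite !ce_S.
  assert (Hbranch : forall b,
    cond_exp n (fun i => p (S i)) (fun d => H (b :: d) * exp (sel_sum (S n) Sel w xi (b :: d)))
    <= cond_exp n (fun i => p (S i)) (fun d => H (b :: d) * exp (2 * sel_sqsum (S n) Sel w (b :: d)))).
  { intros b. rewrite (ce_ext _ _ _ (fun d => H (b :: d) * exp (sel_sum n (fun i => Sel (S i))
      (fun i d => w (S i) (b :: d)) (fun i => xi (S i)) d)))
      by (intros d; destruct (unselected_head_cons n Sel w xi b d HS0) as [-> _]; reflexivity).
    replace (cond_exp n (fun i => p (S i)) (fun d => H (b :: d) * exp (2 * sel_sqsum (S n) Sel w (b :: d))))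
      with (cond_exp n (fun i => p (S i)) (fun d => H (b :: d) * exp (2 * sel_sqsum n (fun i => Sel (S i))
              (fun i d => w (S i) (b :: d)) d)))
      by (apply ce_ext; intros d; destruct (unselected_head_cons n Sel w xi b d HS0) as [_ ->]; reflexivity).
    apply IH; auto; [apply unselected_only_cons; auto|].
    intros i. apply (unselected_only_cons Sel (w (S i))), Hwsel. }
  pose proof (Hp 0%nat).
  apply Rplus_le_compat; apply Rmult_le_compat_l; auto; lra.
Qed.

(** Selected head: by independence the tail sees the same weights for both
    values of [d_0], and the head is integrated by Hoeffding's lemma. *)
Lemma hoeffding_step_selected : Sel 0%nat = true ->
  cond_exp (S n) p (fun d => H d * exp (sel_sum (S n) Sel w xi d))
  <= cond_exp (S n) p (fun d => H d * exp (2 * sel_sqsum (S n) Sel w d)).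
Proof.
  intros HS0. destruct Hxi as [Hm Hb]. rewrite !ce_S.
  set (p' := fun i => p (S i)).
  assert (Hhead := fun b d => selected_head_cons n Sel w xi H b d HS0 HHsel Hwsel).
  set (w0 := fun d => w 0%nat (true :: d)). set (H0 := fun d => H (true :: d)).
  set (R0 := fun d => sel_sum n (fun i => Sel (S i)) (fun i d => w (S i) (true :: d)) (fun i => xi (S i)) d).
  set (Q0 := fun d => sel_sqsum n (fun i => Sel (S i)) (fun i d => w (S i) (true :: d)) d).
  assert (EL : forall b, cond_exp n p' (fun d => H (b :: d) * exp (sel_sum (S n) Sel w xi (b :: d)))
               = cond_exp n p' (fun d => H0 d * exp (R0 d) * exp (w0 d * xi 0%nat b))).
  { intros b. apply ce_ext; intros d. destruct (Hhead b d) as [-> [-> _]].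
    unfold H0, R0, w0. rewrite exp_plus; ring. }
  assert (ER : forall b, cond_exp n p' (fun d => H (b :: d) * exp (2 * sel_sqsum (S n) Sel w (b :: d)))
               = cond_exp n p' (fun d => H0 d * exp (2 * w0 d ^ 2) * exp (2 * Q0 d))).
  { intros b. apply ce_ext; intros d. destruct (Hhead b d) as [-> [_ ->]].
    unfold H0, Q0, w0. rewrite Rmult_plus_distr_l, exp_plus; ring. }
  rewrite !EL, !ER, <- Rmult_plus_distr_r.
  replace (p 0%nat + (1 - p 0%nat)) with 1 by ring. rewrite Rmult_1_l, <- !ce_scal, <- ce_plus.
  apply Rle_trans with (cond_exp n p' (fun d => H0 d * exp (2 * w0 d ^ 2) * exp (R0 d))).
  - apply ce_le; [intros i; apply Hp|]. intros d.
    pose proof (hoeffding_two_point (p 0%nat) (xi 0%nat true) (xi 0%nat false) (w0 d)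
                  (Hp 0%nat) (Hm 0%nat) (Hb _ _) (Hb _ _)) as Hlemma.
    assert (Hpos : 0 <= H0 d * exp (R0 d)) by (apply Rmult_le_pos; [apply HH| left; apply exp_pos]).
    apply (Rmult_le_compat_l _ _ _ Hpos) in Hlemma. nra.
  - apply (IH _ _ (fun d => H0 d * exp (2 * w0 d ^ 2))).
    + intros d. apply Rmult_le_pos; [apply HH| left; apply exp_pos].
    + intros d d' Hdd. unfold H0, w0.
      rewrite (unselected_only_cons Sel H true HHsel d d' Hdd),
        (unselected_only_cons Sel (w 0%nat) true (Hwsel 0%nat) d d' Hdd). reflexivity.
    + intros i. apply (unselected_only_cons Sel (w (S i))), Hwsel.
Qed.

End HoeffdingStep.

Lemma hoeffding_predictable n p xi : probs p -> centred_noise p xi -> hoeffding_bound n p xi.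
Proof.
  revert p xi; induction n; intros p xi Hp Hxi Sel w H HH HHsel Hwsel.
  - rewrite !ce_0. unfold sel_sum, sel_sqsum. simpl. rewrite Rmult_0_r; lra.
  - assert (IH : hoeffding_bound n (fun i => p (S i)) (fun i => xi (S i))).
    { apply IHn; [intros i; apply Hp| destruct Hxi as [Hm Hb]; split; intros; [apply Hm| apply Hb]]. }
    destruct (Sel 0%nat) eqn:HS0;
      [apply hoeffding_step_selected| apply hoeffding_step_unselected]; auto.
Qed.

(** Sub-Gaussian linear forms of the centred observations.
    [eps p i d = d_i - p i] is the noise [delta_i - F(X_i,T_i)]. *)

Definition noise_val (p : nat -> R) (i : nat) (b : bool) : R := (if b then 1 else 0) - p i.
Definition eps (p : nat -> R) (i : nat) (d : list bool) : R := noise_val p i (nth i d false).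

Lemma noise_centred p : probs p -> centred_noise p (noise_val p).
Proof.
  intros Hp. split; intros i; unfold noise_val; [ring|].
  intros b; specialize (Hp i); destruct b; apply Rabs_le; lra.
Qed.

Lemma eps_bound p i d : probs p -> Rabs (eps p i d) <= 1.
Proof. intros Hp. apply (noise_centred p Hp). Qed.

Lemma hoeffding_linear n p (b : nat -> R) : probs p ->
  cond_exp n p (fun d => exp (rsum n (fun i => b i * eps p i d))) <= exp (2 * rsum n (fun i => b i ^ 2)).
Proof.
  intros Hp.
  pose proof (hoeffding_predictable n p (noise_val p) Hp (noise_centred p Hp)
                (fun _ => true) (fun i _ => b i) (fun _ => 1) ltac:(intros; lra) ltac:(intros d d' _; reflexivity)
                ltac:(intros i d d' _; reflexivity)) as H.
  apply Rle_trans with (cond_exp n p (fun d => 1 * exp (sel_sum n (fun _ => true) (fun i _ => b i) (noise_val p) d))).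
  { right. apply ce_ext; intros d. rewrite Rmult_1_l. reflexivity. }
  eapply Rle_trans; [exact H|]. right.
  rewrite <- (ce_const n p (exp (2 * rsum n (fun i => b i ^ 2)))).
  apply ce_ext; intros d. rewrite Rmult_1_l. reflexivity.
Qed.

Lemma mgf_shifted_linear n p (b : nat -> R) a s : probs p -> rsum n (fun j => b j ^ 2) <= 1 -> 0 <= a ->
  cond_exp n p (fun d => exp (a * (rsum n (fun j => b j * eps p j d) - s))) <= exp (2 * a ^ 2 - a * s).
Proof.
  intros Hp Hb Ha.
  rewrite (ce_ext _ _ _ (fun d => exp (- (a * s)) * exp (rsum n (fun j => (a * b j) * eps p j d)))).
  - rewrite ce_scal.
    apply Rle_trans with (exp (- (a * s)) * exp (2 * rsum n (fun j => (a * b j) ^ 2))).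
    + apply Rmult_le_compat_l; [left; apply exp_pos| apply hoeffding_linear; auto].
    + rewrite <- exp_plus. apply exp_le.
      rewrite (rsum_ext _ _ (fun j => a ^ 2 * b j ^ 2)), rsum_scal by (intros; ring). nra.
  - intros d. rewrite <- exp_plus. f_equal.
    rewrite (rsum_ext n (fun j => a * b j * eps p j d) (fun j => a * (b j * eps p j d))), rsum_scal
      by (intros; ring). ring.
Qed.

Lemma linear_form_bound n p b d : probs p -> (forall j, (j < n)%nat -> Rabs (b j) <= 1) ->
  Rabs (rsum n (fun j => b j * eps p j d)) <= INR n.
Proof.
  intros Hp Hbj. induction n; simpl rsum.
  - rewrite Rabs_R0; simpl; lra.
  - rewrite S_INR. eapply Rle_trans; [apply Rabs_triang|]. rewrite Rabs_mult.
    pose proof (Hbj n ltac:(lia)). pose proof (eps_bound p n d Hp).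
    pose proof (Rabs_pos (b n)). pose proof (Rabs_pos (eps p n d)).
    assert (Rabs (rsum n (fun j => b j * eps p j d)) <= INR n) by (apply IHn; intros; apply Hbj; lia).
    nra.
Qed.

(** Layer-cake bound: with [k] the integer part of [y^2],
    [exp (c y^2) <= exp (c (k+1))] and one of [exp (a (+-y - sqrt k))] is [>= 1]. *)
Lemma exp_sq_layers (y c : R) (K : nat) (a : nat -> R) :
  0 <= c -> y ^ 2 < INR K + 1 -> (forall k, 0 <= a k) ->
  exp (c * y ^ 2) <= rsum (S K) (fun k => exp (c * (INR k + 1)) *
    (exp (a k * (y - sqrt (INR k))) + exp (a k * (- y - sqrt (INR k))))).
Proof.
  intros Hc Hy Ha.
  destruct (floor_exists (y ^ 2) K ltac:(nra) Hy) as [k [Hk Hk2]].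
  set (T := fun k => exp (c * (INR k + 1)) *
    (exp (a k * (y - sqrt (INR k))) + exp (a k * (- y - sqrt (INR k))))).
  apply Rle_trans with (T k).
  2: { apply (rsum_le_term (S K) T); [lia|]. intros j _. unfold T.
       pose proof (exp_pos (c * (INR j + 1))). pose proof (exp_pos (a j * (y - sqrt (INR j)))).
       pose proof (exp_pos (a j * (- y - sqrt (INR j)))). nra. }
  unfold T. assert (Hsq : sqrt (INR k) <= Rabs y).
  { rewrite <- (sqrt_Rsqr (Rabs y)) by apply Rabs_pos. apply sqrt_le_1_alt.
    unfold Rsqr. rewrite <- pow2_abs in Hk2. nra. }
  assert (1 <= exp (a k * (y - sqrt (INR k))) + exp (a k * (- y - sqrt (INR k)))).
  { specialize (Ha k). unfold Rabs in Hsq. destruct (Rcase_abs y).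
    - pose proof (exp_ineq1_le (a k * (- y - sqrt (INR k)))).
      pose proof (exp_pos (a k * (y - sqrt (INR k)))). nra.
    - pose proof (exp_ineq1_le (a k * (y - sqrt (INR k)))).
      pose proof (exp_pos (a k * (- y - sqrt (INR k)))). nra. }
  assert (exp (c * y ^ 2) <= exp (c * (INR k + 1))) by (apply exp_le; nra).
  pose proof (exp_pos (c * (INR k + 1))). nra.
Qed.

(** The universal constant bounding [E exp (Y^2 / 16)] below. *)
Definition C0 : R := 2 * exp (/16) / (1 - exp (- / 16)).

Lemma exp_neg_sixteenth_lt_1 : exp (- / 16) < 1.
Proof. rewrite <- exp_0. apply exp_increasing. lra. Qed.

Lemma C0_ge_1 : 1 <= C0.
Proof.
  unfold C0. pose proof exp_neg_sixteenth_lt_1. pose proof (exp_pos (- / 16)).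
  assert (1 <= exp (/16)) by (pose proof (exp_ineq1_le (/16)); lra).
  apply (Rmult_le_reg_r (1 - exp (- / 16))); [lra|].
  unfold Rdiv. rewrite Rmult_assoc, Rinv_l by lra. nra.
Qed.

Lemma exp_square_linear n p (b : nat -> R) c : probs p -> rsum n (fun j => b j ^ 2) <= 1 ->
  0 <= c <= /16 -> cond_exp n p (fun d => exp (c * (rsum n (fun j => b j * eps p j d)) ^ 2)) <= C0.
Proof.
  intros Hp Hb Hc.
  set (Y := fun d => rsum n (fun j => b j * eps p j d)).
  set (K := (n * n)%nat). set (a := fun k : nat => sqrt (INR k) / 4).
  assert (Ha : forall k, 0 <= a k) by (intros k; unfold a; pose proof (sqrt_pos (INR k)); lra).
  assert (Hlayers : forall d, exp (c * Y d ^ 2) <= rsum (S K) (fun k => exp (c * (INR k + 1)) *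
            (exp (a k * (Y d - sqrt (INR k))) + exp (a k * (- Y d - sqrt (INR k)))))).
  { intros d. apply exp_sq_layers; auto; [lra|].
    assert (Hbj : forall j, (j < n)%nat -> Rabs (b j) <= 1).
    { intros j Hj. assert (b j ^ 2 <= 1).
      { eapply Rle_trans; [|apply Hb]. apply (rsum_le_term n (fun j => b j ^ 2)); auto. intros; nra. }
      rewrite <- pow2_abs in H. pose proof (Rabs_pos (b j)). nra. }
    pose proof (linear_form_bound n p b d Hp Hbj). pose proof (Rabs_pos (Y d)).
    unfold K. rewrite mult_INR, <- pow2_abs. fold (Y d) in H. nra. }
  set (r := exp (- / 16)).
  assert (Hr : 0 <= r < 1) by (split; [left; apply exp_pos| apply exp_neg_sixteenth_lt_1]).
  eapply Rle_trans; [apply ce_le; [auto| exact Hlayers]|]. rewrite ce_rsum.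
  apply Rle_trans with (rsum (S K) (fun k => 2 * exp (/16) * r ^ k)).
  - apply rsum_le; intros k _. rewrite ce_scal, ce_plus.
    assert (E1 := mgf_shifted_linear n p b (a k) (sqrt (INR k)) Hp Hb (Ha k)).
    assert (E2 := mgf_shifted_linear n p (fun j => - b j) (a k) (sqrt (INR k)) Hp
                   ltac:(rewrite (rsum_ext _ _ (fun j => b j ^ 2)) by (intros; ring); auto) (Ha k)).
    rewrite (ce_ext _ _ (fun d => exp (a k * (rsum n (fun j => - b j * eps p j d) - _))) 
               (fun d => exp (a k * (- Y d - sqrt (INR k))))) in E2.
    2: { intros d. unfold Y.
         rewrite (rsum_ext n (fun j => - b j * eps p j d) (fun j => -1 * (b j * eps p j d))), rsum_scal
           by (intros; ring). f_equal. ring. }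
    assert (Hak : 2 * a k ^ 2 - a k * sqrt (INR k) = - INR k / 8).
    { unfold a. assert (sqrt (INR k) * sqrt (INR k) = INR k) by (apply sqrt_sqrt, pos_INR).
      field_simplify. replace (sqrt (INR k) ^ 2) with (INR k) by (simpl; rewrite Rmult_1_r; auto). field. }
    rewrite Hak in E1, E2.
    change (cond_exp n p (fun d => exp (a k * (Y d - sqrt (INR k)))) <= exp (- INR k / 8)) in E1.
    assert (exp (c * (INR k + 1)) * exp (- INR k / 8) <= exp (/16) * r ^ k).
    { rewrite <- exp_plus. unfold r. rewrite <- exp_INR_mult, <- exp_plus. apply exp_le.
      pose proof (pos_INR k). nra. }
    pose proof (exp_pos (c * (INR k + 1))). nra.
  - rewrite rsum_scal. unfold C0. fold r. pose proof (geometric_sum_le (S K) r Hr).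
    pose proof (exp_pos (/16)). unfold Rdiv. apply Rmult_le_compat_l; [lra| auto].
Qed.

(** Its mean is at most [d/4]; we show that it exceeds
    [(1 + et) D / 4] only with exponentially small excess
    ([excess_tail]).  The proof splits [|P eps|^2] into its diagonal part,
    a sum of independent centred terms, and its off-diagonal part, a
    Gaussian-chaos-like term handled by decoupling. *)

Definition proj_entry (d : nat) (e : nat -> nat -> R) (i j : nat) : R := rsum d (fun k => e k i * e k j).

Definition proj_energy (n : nat) (p : nat -> R) (d : nat) (e : nat -> nat -> R) (dl : list bool) : R :=
  rsum d (fun k => (rsum n (fun i => e k i * eps p i dl)) ^ 2).

(** Centred square of the noise: [eps_i^2 - Var eps_i]. *)
Definition sq_noise_val (p : nat -> R) (i : nat) (b : bool) : R := (noise_val p i b) ^ 2 - p i * (1 - p i).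

Definition diag_part n p d e (dl : list bool) : R :=
  rsum n (fun i => proj_entry d e i i * sq_noise_val p i (nth i dl false)).

Definition offdiag_part n p d e (dl : list bool) : R :=
  rsum n (fun i => rsum n (fun j =>
    if Nat.eqb i j then 0 else proj_entry d e i j * eps p i dl * eps p j dl)).

Lemma proj_energy_decomp n p d e dl : proj_energy n p d e dl =
  rsum n (fun i => proj_entry d e i i * eps p i dl ^ 2) + offdiag_part n p d e dl.
Proof.
  unfold proj_energy, offdiag_part.
  rewrite (rsum_ext d _ (fun k => rsum n (fun i => rsum n (fun j => e k i * e k j * (eps p i dl * eps p j dl))))).
  2: { intros k _. rewrite rsum_square. apply rsum_ext; intros i _; apply rsum_ext; intros; ring. }
  rewrite rsum_swap, <- rsum_plus. apply rsum_ext; intros i Hi.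
  rewrite rsum_swap, (rsum_split_diag n _ i Hi). f_equal.
  - unfold proj_entry. rewrite <- rsum_scal_r. apply rsum_ext; intros; ring.
  - apply rsum_ext; intros j _. destruct (Nat.eqb i j); auto.
    unfold proj_entry. rewrite <- !rsum_scal_r. apply rsum_ext; intros; ring.
Qed.

Lemma proj_trace n d e : orthonormal n d e -> rsum n (fun i => proj_entry d e i i) = INR d.
Proof.
  intros Ho. unfold proj_entry. rewrite <- rsum_swap, (rsum_ext d _ (fun _ => 1)), rsum_const; [ring|].
  intros k Hk. pose proof (Ho k k Hk Hk) as H. rewrite Nat.eqb_refl in H. rewrite <- H. reflexivity.
Qed.

(** The diagonal entries of a projection lie in [[0,1]] (Bessel). *)
Lemma proj_diag_bounds n d e i :
  orthonormal n d e -> (i < n)%nat -> 0 <= proj_entry d e i i <= 1.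
Proof.
  intros Ho Hi. split; [apply rsum_nonneg; intros; nra|].
  set (u := fun j => if Nat.eqb i j then 1 else 0).
  pose proof (bessel n d e u Ho) as H.
  assert (Hu : dot n u u = 1).
  { unfold dot. rewrite (rsum_ext n _ (fun j => 1 * (if Nat.eqb i j then 1 else 0))).
    - apply (rsum_delta n i (fun _ => 1) Hi).
    - intros j _; unfold u; destruct (Nat.eqb i j); ring. }
  assert (He : forall k, dot n (e k) u = e k i) by (intros k; apply (rsum_delta n i (e k) Hi)).
  rewrite Hu in H. unfold proj_entry.
  rewrite (rsum_ext d _ (fun k => dot n (e k) u ^ 2)); auto. intros k _. rewrite He; ring.
Qed.

(** [|P eps|^2 <= d/4 + diagonal + off-diagonal part], since
    [Var eps_i <= 1/4] and [tr P = d]. *)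
Lemma proj_energy_le n p d e dl : probs p -> orthonormal n d e ->
  proj_energy n p d e dl <= INR d / 4 + diag_part n p d e dl + offdiag_part n p d e dl.
Proof.
  intros Hp Ho. rewrite proj_energy_decomp. unfold diag_part.
  assert (E : rsum n (fun i => proj_entry d e i i * eps p i dl ^ 2) =
    rsum n (fun i => proj_entry d e i i * (p i * (1 - p i))) +
    rsum n (fun i => proj_entry d e i i * sq_noise_val p i (nth i dl false))).
  { rewrite <- rsum_plus. apply rsum_ext; intros. unfold sq_noise_val, eps. ring. }
  assert (Hvar : rsum n (fun i => proj_entry d e i i * (p i * (1 - p i)))
                 <= rsum n (fun i => proj_entry d e i i * /4)).
  { apply rsum_le; intros i Hi. destruct (proj_diag_bounds n d e i Ho Hi). specialize (Hp i).
    assert (p i * (1 - p i) = /4 - (p i - /2) ^ 2) by field.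
    pose proof (pow2_ge_0 (p i - /2)). apply Rmult_le_compat_l; lra. }
  rewrite rsum_scal_r, proj_trace in Hvar by auto. lra.
Qed.

(** The diagonal part is a weighted sum of independent centred terms. *)
Lemma diag_mgf n p d e t : probs p -> orthonormal n d e ->
  cond_exp n p (fun dl => exp (t * diag_part n p d e dl)) <= exp (2 * t ^ 2 * INR d).
Proof.
  intros Hp Ho.
  assert (Hxi : centred_noise p (sq_noise_val p)).
  { split; intros i; unfold sq_noise_val, noise_val; [ring|].
    intros b; specialize (Hp i); destruct b; apply Rabs_le; nra. }
  pose proof (hoeffding_predictable n p (sq_noise_val p) Hp Hxi (fun _ => true)
    (fun i _ => t * proj_entry d e i i) (fun _ => 1) ltac:(intros; lra)
    ltac:(intros ? ? _; reflexivity) ltac:(intros ? ? ? _; reflexivity)) as H.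
  apply Rle_trans with (cond_exp n p (fun dl => 1 * exp (sel_sum n (fun _ => true)
           (fun i _ => t * proj_entry d e i i) (sq_noise_val p) dl))).
  { right. apply ce_ext; intros dl. rewrite Rmult_1_l. f_equal. unfold diag_part, sel_sum.
    rewrite <- rsum_scal. apply rsum_ext; intros; ring. }
  eapply Rle_trans; [exact H|].
  rewrite <- (ce_const n p (exp (2 * t ^ 2 * INR d))). apply ce_le; auto. intros dl.
  rewrite Rmult_1_l. apply exp_le. unfold sel_sqsum.
  rewrite (rsum_ext _ _ (fun i => t ^ 2 * (proj_entry d e i i * proj_entry d e i i))), rsum_scal
    by (intros; ring).
  assert (rsum n (fun i => proj_entry d e i i * proj_entry d e i i) <= rsum n (fun i => proj_entry d e i i)).
  { apply rsum_le; intros i Hi. pose proof (proj_diag_bounds n d e i Ho Hi). nra. }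
  rewrite proj_trace in H0 by auto. nra.
Qed.

(** Exponential moment of the energy of the noise restricted to the
    coordinates unmasked by [s]: by convexity it is an average of
    square-exponential moments of unit linear forms. *)
Lemma masked_proj_mgf n p d e s mu : probs p -> orthonormal n d e -> 0 <= mu -> mu * INR d <= /16 ->
  cond_exp n p (fun dl => exp (mu * rsum d (fun k =>
    (rsum n (fun j => (if nth j s false then 0 else e k j) * eps p j dl)) ^ 2))) <= C0.
Proof.
  intros Hp Ho Hmu Hd. destruct d as [|d'].
  - simpl. rewrite Rmult_0_r, exp_0, ce_const. apply C0_ge_1.
  - set (d := S d'). assert (HdR : 0 < INR d) by (apply lt_0_INR; unfold d; lia).
    set (Yk := fun k dl => rsum n (fun j => (if nth j s false then 0 else e k j) * eps p j dl)).
    apply Rle_trans with (cond_exp n p (fun dl => / INR d * rsum d (fun k => exp (mu * INR d * Yk k dl ^ 2)))).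
    + apply ce_le; auto. intros dl.
      replace (/ INR d * rsum d (fun k => exp (mu * INR d * Yk k dl ^ 2)))
        with (rsum d (fun k => exp (mu * INR d * Yk k dl ^ 2)) / INR d) by (unfold Rdiv; ring).
      eapply Rle_trans; [|apply exp_average; unfold d; lia].
      apply exp_le. rewrite <- rsum_scal. unfold Rdiv. rewrite <- rsum_scal_r.
      right; apply rsum_ext; intros. unfold Yk. field; lra.
    + rewrite ce_scal, ce_rsum. apply Rle_trans with (/ INR d * rsum d (fun _ => C0)).
      * apply Rmult_le_compat_l; [left; apply Rinv_0_lt_compat; auto|].
        apply rsum_le; intros k Hk. apply exp_square_linear; auto; [| split; [apply Rmult_le_pos; lra| auto]].
        apply Rle_trans with (rsum n (fun j => e k j ^ 2)).
        -- apply rsum_le; intros j _. destruct (nth j s false); nra.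
        -- pose proof (Ho k k Hk Hk) as H. rewrite Nat.eqb_refl in H. unfold dot in H.
           right. rewrite <- H. apply rsum_ext; intros; ring.
      * rewrite rsum_const. right. field. lra.
Qed.

(** Decoupling.  Averaging over an independent fair random subset [s],
    each ordered pair [i <> j] is split as ([i] in [s], [j] not in [s])
    with probability [1/4]. *)
Definition split_ind (s : list bool) (i j : nat) : R :=
  if andb (nth i s false) (negb (nth j s false)) then 1 else 0.

Definition masked_weight n d e p (s : list bool) (i : nat) (dl : list bool) : R :=
  rsum n (fun j => (if nth j s false then 0 else proj_entry d e i j) * eps p j dl).

Lemma offdiag_decouple n p d e dl t : t * offdiag_part n p d e dl =
  cond_exp n (fun _ => /2) (fun s => 4 * t * rsum n (fun i => rsum n (fun j =>
    split_ind s i j * (proj_entry d e i j * eps p i dl * eps p j dl)))).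
Proof.
  rewrite ce_scal, ce_rsum. unfold offdiag_part. rewrite <- !rsum_scal.
  apply rsum_ext; intros i Hi. rewrite ce_rsum, <- !rsum_scal. apply rsum_ext; intros j Hj.
  rewrite (ce_ext _ _ _ (fun s => (proj_entry d e i j * eps p i dl * eps p j dl) * split_ind s i j))
    by (intros; ring).
  rewrite ce_scal. unfold split_ind. rewrite ce_indicator_pair by auto. destruct (Nat.eqb i j); field.
Qed.

(** For fixed [s] the decoupled form is linear in the noise of [s], with
    weights depending only on the noise outside [s]. *)
Lemma decoupled_form n p d e s dl t :
  4 * t * rsum n (fun i => rsum n (fun j => split_ind s i j * (proj_entry d e i j * eps p i dl * eps p j dl))) =
  sel_sum n (fun i => nth i s false) (fun i dl => 4 * t * masked_weight n d e p s i dl) (noise_val p) dl.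
Proof.
  unfold sel_sum. rewrite <- rsum_scal. apply rsum_ext; intros i _.
  unfold split_ind, masked_weight. destruct (nth i s false); simpl.
  - rewrite <- !rsum_scal, <- rsum_scal_r. apply rsum_ext; intros j _. unfold eps.
    destruct (nth j s false); simpl; ring.
  - rewrite (rsum_ext _ _ (fun _ => 0)), rsum_zero by (intros; ring). ring.
Qed.

Lemma masked_weight_comb n d e p s dl i : masked_weight n d e p s i dl =
  lin_comb d (fun k => rsum n (fun j => (if nth j s false then 0 else e k j) * eps p j dl)) e i.
Proof.
  unfold masked_weight, lin_comb, proj_entry.
  rewrite (rsum_ext n _ (fun j => rsum d (fun k => e k i * ((if nth j s false then 0 else e k j) * eps p j dl)))).
  - rewrite rsum_swap. apply rsum_ext; intros k _. rewrite rsum_scal. ring.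
  - intros j _. destruct (nth j s false).
    + rewrite (rsum_ext _ _ (fun _ => 0)), rsum_zero by (intros; ring). ring.
    + rewrite <- rsum_scal_r. apply rsum_ext; intros; ring.
Qed.

(** Exponential moment of the off-diagonal part: decouple, apply
    conditional Hoeffding to the [s]-coordinates, then [masked_proj_mgf]. *)
Lemma offdiag_mgf n p d e t : probs p -> orthonormal n d e -> 32 * t ^ 2 * INR d <= /16 ->
  cond_exp n p (fun dl => exp (t * offdiag_part n p d e dl)) <= C0.
Proof.
  intros Hp Ho Ht. set (half := fun _ : nat => /2).
  assert (Hq : probs half) by (intros i; unfold half; lra).
  set (Sel := fun s i => nth i s false).
  set (W := fun s i dl => 4 * t * masked_weight n d e p s i dl).
  apply Rle_trans with (cond_exp n p (fun dl => cond_exp n half (fun s => exp (sel_sum n (Sel s) (W s) (noise_val p) dl)))).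
  { apply ce_le; auto. intros dl. rewrite offdiag_decouple. eapply Rle_trans; [apply ce_jensen_exp; auto|].
    right. apply ce_ext; intros s. rewrite decoupled_form; auto. }
  rewrite ce_swap, <- (ce_const n half C0). apply ce_le; auto. intros s.
  assert (Hindep : forall i, unselected_only (Sel s) (W s i)).
  { intros i dl dl' Hdd. unfold W, masked_weight. f_equal. apply rsum_ext; intros j _.
    unfold Sel in Hdd. specialize (Hdd j). destruct (nth j s false); [ring|]. unfold eps. rewrite Hdd; auto. }
  pose proof (hoeffding_predictable n p (noise_val p) Hp (noise_centred p Hp) (Sel s) (W s) (fun _ => 1)
    ltac:(intros; lra) ltac:(intros ? ? _; reflexivity) Hindep) as H.
  apply Rle_trans with (cond_exp n p (fun dl => 1 * exp (sel_sum n (Sel s) (W s) (noise_val p) dl))).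
  { right. apply ce_ext; intros; ring. }
  eapply Rle_trans; [exact H|]. clear H.
  eapply Rle_trans; [|apply (masked_proj_mgf n p d e s (32 * t ^ 2)); auto; nra].
  apply ce_le; auto. intros dl. rewrite Rmult_1_l. apply exp_le.
  set (c := fun k => rsum n (fun j => (if nth j s false then 0 else e k j) * eps p j dl)).
  assert (E : rsum n (fun i => masked_weight n d e p s i dl ^ 2) = rsum d (fun k => c k ^ 2)).
  { rewrite <- (sqnorm_lin_comb n d c e Ho). unfold dot. apply rsum_ext; intros i _.
    rewrite masked_weight_comb. fold c. ring. }
  apply Rle_trans with (32 * t ^ 2 * rsum n (fun i => masked_weight n d e p s i dl ^ 2)); [|right; rewrite E; auto].
  unfold sel_sqsum, W. rewrite <- !rsum_scal. apply rsum_le; intros i _. unfold Sel.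
  destruct (nth i s false); nra.
Qed.

(** Pointwise Chernoff-type bound for the excess of the energy over
    [(1 + et) D / 4], using [xy <= (x^2 + y^2) / 2]. *)
Lemma excess_exp_bound (X Dg Z dd DD et l : R) : 0 < l -> X <= dd / 4 + Dg + Z -> dd <= DD ->
  Rmax (X - (1 + et) * DD / 4) 0 <= exp (- l * et * DD / 4) / l * ((exp (2 * l * Dg) + exp (2 * l * Z)) / 2).
Proof.
  intros Hl HX Hdd.
  apply Rle_trans with (Rmax (Dg + Z - et * DD / 4) 0).
  { unfold Rmax. destruct (Rle_dec _ 0), (Rle_dec _ 0); lra. }
  eapply Rle_trans; [apply (Rmax0_le_exp _ l Hl)|].
  replace (l * (Dg + Z - et * DD / 4)) with (- l * et * DD / 4 + (l * Dg + l * Z)) by field.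
  replace (2 * l * Dg) with (l * Dg + l * Dg) by ring.
  replace (2 * l * Z) with (l * Z + l * Z) by ring. rewrite !exp_plus.
  set (x := exp (l * Dg)). set (y := exp (l * Z)). set (c := exp (- l * et * DD / 4)).
  assert (0 < c / l) by (apply Rdiv_lt_0_compat; [apply exp_pos| auto]).
  assert (x * y <= (x * x + y * y) / 2) by (pose proof (pow2_ge_0 (x - y)); nra).
  replace (c * (x * y) / l) with (c / l * (x * y)) by (field; lra).
  apply Rmult_le_compat_l; lra.
Qed.

(** [s exp (-2 a s) <= exp (- a s) / a]: a polynomial prefactor is absorbed
    by halving the exponential rate. *)
Lemma linear_times_exp_le s a : 0 < a -> s * exp (-2 * a * s) <= exp (- a * s) / a.
Proof.
  intros Ha. assert (Hs : a * s <= exp (a * s)) by (pose proof (exp_ineq1_le (a * s)); lra).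
  replace (exp (- a * s) / a) with (exp (a * s) / a * exp (-2 * a * s)).
  - apply Rmult_le_compat_r; [left; apply exp_pos|].
    apply (Rmult_le_reg_l a); auto. replace (a * (exp (a * s) / a)) with (exp (a * s)) by (field; lra). lra.
  - replace (- a * s) with (a * s + -2 * a * s) by ring. rewrite exp_plus. field. lra.
Qed.

Definition tail_rate (et : R) : R := /64 * et / 8.
Definition tail_const (et : R) : R := (exp 1 + C0) / 2 / (/64 * tail_rate et).

Lemma tail_rate_pos et : 0 < et -> 0 < tail_rate et.
Proof. intros; unfold tail_rate; lra. Qed.

Lemma tail_const_pos et : 0 < et -> 0 < tail_const et.
Proof.
  intros Het. pose proof (tail_rate_pos et Het). pose proof C0_ge_1. pose proof (exp_pos 1).
  unfold tail_const. apply Rdiv_lt_0_compat; [lra| nra].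
Qed.

Lemma excess_tail et n p d e D : 0 < et -> probs p -> orthonormal n d e -> (d <= D)%nat ->
  cond_exp n p (fun dl => Rmax (proj_energy n p d e dl - (1 + et) * INR D / 4) 0)
  <= tail_const et * exp (- tail_rate et * sqrt (INR D)).
Proof.
  intros Het Hp Ho HdD. set (c0 := /64). set (a := tail_rate et). set (M := (exp 1 + C0) / 2).
  assert (Hc0 : 0 < c0) by (unfold c0; lra). assert (Ha : 0 < a) by (apply tail_rate_pos; auto).
  assert (HM : 0 < M) by (unfold M; pose proof C0_ge_1; pose proof (exp_pos 1); lra).
  replace (tail_const et) with (M / (c0 * a)) by reflexivity.
  destruct D as [|D'].
  - (* [D = 0]: the energy vanishes *)
    assert (d = 0%nat) by lia. subst d. unfold proj_energy. simpl rsum.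
    rewrite (ce_ext _ _ _ (fun _ => 0)), ce_const.
    + apply Rmult_le_pos; [left; apply Rdiv_lt_0_compat; nra| left; apply exp_pos].
    + intros; simpl INR; unfold Rmax; destruct (Rle_dec _ _); lra.
  - (* Chernoff with parameter [l = c0 / sqrt D] *)
    set (D := S D'). assert (HD : 1 <= INR D) by (unfold D; rewrite S_INR; pose proof (pos_INR D'); lra).
    set (sD := sqrt (INR D)). assert (HsD : 0 < sD) by (apply sqrt_lt_R0; lra).
    assert (HsD2 : sD * sD = INR D) by (apply sqrt_sqrt; lra).
    set (l := c0 / sD). assert (Hl : 0 < l) by (apply Rdiv_lt_0_compat; auto).
    assert (Hl2 : l ^ 2 * INR D = c0 ^ 2) by (unfold l; rewrite <- HsD2; field; lra).
    assert (HdR : INR d <= INR D) by (apply le_INR; auto).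
    eapply Rle_trans.
    { apply ce_le; [auto|]. intros dl.
      exact (excess_exp_bound _ _ _ _ _ et l Hl (proj_energy_le n p d e dl Hp Ho) HdR). }
    rewrite ce_scal.
    rewrite (ce_ext _ _ _ (fun dl => / 2 * (exp (2 * l * diag_part n p d e dl) + exp (2 * l * offdiag_part n p d e dl))))
      by (intros; field).
    rewrite ce_scal, ce_plus.
    assert (E1 : cond_exp n p (fun dl => exp (2 * l * diag_part n p d e dl)) <= exp 1).
    { eapply Rle_trans; [apply diag_mgf; auto|]. apply exp_le. unfold c0 in Hl2. nra. }
    assert (E2 : cond_exp n p (fun dl => exp (2 * l * offdiag_part n p d e dl)) <= C0).
    { apply offdiag_mgf; auto. unfold c0 in Hl2. nra. }
    assert (Hexp : exp (- l * et * INR D / 4) = exp (-2 * a * sD)).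
    { f_equal. unfold l, a, tail_rate. fold c0. rewrite <- HsD2. field. lra. }
    rewrite Hexp.
    apply Rle_trans with (exp (-2 * a * sD) / l * M).
    { apply Rmult_le_compat_l; [apply Rlt_le, Rdiv_lt_0_compat; [apply exp_pos| auto]|]. unfold M. lra. }
    replace (exp (-2 * a * sD) / l * M) with (sD * exp (-2 * a * sD) * (M / c0)) by (unfold l; field; lra).
    replace (M / (c0 * a) * exp (- a * sD)) with (exp (- a * sD) / a * (M / c0)) by (field; lra).
    apply Rmult_le_compat_r; [apply Rlt_le, Rdiv_lt_0_compat; auto|]. apply linear_times_exp_le; auto.
Qed.

Lemma young_sum d (c y : nat -> R) al : 0 < al ->
  2 * rsum d (fun k => c k * y k) <= al * rsum d (fun k => c k ^ 2) + rsum d (fun k => y k ^ 2) / al.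
Proof.
  intros Hal. unfold Rdiv. rewrite <- rsum_scal_r, <- !rsum_scal, <- rsum_plus.
  apply rsum_le; intros k _. pose proof (young (c k) (y k) al Hal). unfold Rdiv in H. lra.
Qed.

Lemma sqdist_triangle n (u v w : nat -> R) be : 0 < be ->
  rsum n (fun i => (u i - w i) ^ 2) <=
  (1 + be) * rsum n (fun i => (u i - v i) ^ 2) + (1 + / be) * rsum n (fun i => (v i - w i) ^ 2).
Proof.
  intros Hbe. rewrite <- !rsum_scal, <- rsum_plus. apply rsum_le; intros i _.
  pose proof (young (u i - v i) (v i - w i) be Hbe). unfold Rdiv in H.
  replace ((u i - w i) ^ 2) with ((u i - v i) ^ 2 + 2 * (u i - v i) * (v i - w i) + (v i - w i) ^ 2) by ring.
  replace ((1 + be) * (u i - v i) ^ 2 + (1 + / be) * (v i - w i) ^ 2) with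
    ((u i - v i) ^ 2 + (v i - w i) ^ 2 + (be * (u i - v i) ^ 2 + (v i - w i) ^ 2 * / be)) by ring.
  lra.
Qed.

(** For one outcome of the observations, compare the
    selected least-squares estimator with a fixed competitor [G]: both lie
    in the span of an orthonormal family [e], so the cross term with the
    noise is controlled by the projected noise energy (all sums are over
    the design points; [obs] are the observations and [f] the target). *)
Lemma oracle_deterministic n (f Fh G obs : nat -> R) (d : nat) (e : nat -> nat -> R) al be th et Dm Dmh :
  orthonormal n d e -> in_span n d e (fun i => Fh i - G i) -> 0 < al -> 0 < be -> (1 + et) / al = th ->
  rsum n (fun i => (obs i - Fh i) ^ 2) + th / 4 * Dmh <= rsum n (fun i => (obs i - G i) ^ 2) + th / 4 * Dm ->
  (1 - al * (1 + be)) * rsum n (fun i => (Fh i - f i) ^ 2) <=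
  (1 + al * (1 + / be)) * rsum n (fun i => (f i - G i) ^ 2) + th * Dm / 2 +
  / al * Rmax (rsum d (fun k => (rsum n (fun i => e k i * (obs i - f i))) ^ 2) - (1 + et) * (Dm + Dmh) / 4) 0.
Proof.
  intros Ho [c Hc] Hal Hbe Hth Hsel.
  set (noise := fun i => obs i - f i).
  set (P := rsum n (fun i => (Fh i - f i) ^ 2)). set (Q := rsum n (fun i => (f i - G i) ^ 2)).
  set (X := rsum d (fun k => (rsum n (fun i => e k i * noise i)) ^ 2)).
  set (cross := rsum n (fun i => noise i * (Fh i - G i))).
  (* expanding the squares, the selection inequality becomes [P <= Q + 2 cross + pen terms] *)
  assert (Hexpand : forall h, rsum n (fun i => (obs i - h i) ^ 2) = rsum n (fun i => (f i - h i) ^ 2)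
            + 2 * rsum n (fun i => noise i * (f i - h i)) + rsum n (fun i => noise i ^ 2)).
  { intros h. rewrite <- rsum_scal, <- !rsum_plus. apply rsum_ext; intros; unfold noise; ring. }
  rewrite !Hexpand in Hsel.
  assert (Ecross : rsum n (fun i => noise i * (f i - G i)) = rsum n (fun i => noise i * (f i - Fh i)) + cross)
    by (unfold cross; rewrite <- rsum_plus; apply rsum_ext; intros; ring).
  assert (EP : rsum n (fun i => (f i - Fh i) ^ 2) = P) by (unfold P; apply rsum_ext; intros; ring).
  rewrite Ecross, EP in Hsel. fold Q in Hsel.
  (* the cross term in the orthonormal coordinates [c] of [Fh - G] *)
  assert (Hcross : cross = rsum d (fun k => c k * rsum n (fun i => e k i * noise i))).
  { transitivity (dot n (lin_comb d c e) noise).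
    - unfold cross, dot. apply rsum_ext; intros i Hi. rewrite <- Hc by auto. ring.
    - rewrite dot_lin_comb_l. reflexivity. }
  assert (Hnorm : rsum n (fun i => (Fh i - G i) ^ 2) = rsum d (fun k => c k ^ 2)).
  { rewrite <- (sqnorm_lin_comb n d c e Ho). unfold dot. apply rsum_ext; intros i Hi. rewrite <- Hc by auto. ring. }
  assert (H2 : 2 * cross <= al * rsum d (fun k => c k ^ 2) + X / al)
    by (rewrite Hcross; apply young_sum; auto).
  assert (H3 := sqdist_triangle n Fh f G be Hbe). fold P Q in H3.
  rewrite Hnorm in H3.
  assert (H4 : al * rsum d (fun k => c k ^ 2) <= al * ((1 + be) * P + (1 + / be) * Q))
    by (apply Rmult_le_compat_l; lra).
  assert (H5 : X / al + th / 4 * (Dm - Dmh) <= / al * Rmax (X - (1 + et) * (Dm + Dmh) / 4) 0 + th * Dm / 2).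
  { pose proof (Rmax_l (X - (1 + et) * (Dm + Dmh) / 4) 0).
    assert (/ al * (X - (1 + et) * (Dm + Dmh) / 4) <= / al * Rmax (X - (1 + et) * (Dm + Dmh) / 4) 0)
      by (apply Rmult_le_compat_l; [left; apply Rinv_0_lt_compat; auto| auto]).
    assert (/ al * (X - (1 + et) * (Dm + Dmh) / 4) = X / al - th * (Dm + Dmh) / 4) by (rewrite <- Hth; field; lra).
    lra. }
  change (rsum d (fun k => (rsum n (fun i => e k i * (obs i - f i))) ^ 2)) with X.
  assert (HP : P <= Q + 2 * cross + th / 4 * (Dm - Dmh)) by lra.
  replace (al * ((1 + be) * P + (1 + / be) * Q)) with (al * (1 + be) * P + al * (1 + / be) * Q) in H4 by ring.
  lra.
Qed.

(** Models at the design points.  The model [S_m] restricted to the design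
    is spanned by the [D1 * D2] vectors [phi_k(X_i) psi_l(T_i)], indexed by
    [j = k D2 + l]. *)

Definition model_vec (x t : nat -> R) (D2 : nat) (ph ps : nat -> R -> R) (j : nat) : nat -> R :=
  fun i => ph (j / D2)%nat (x i) * ps (j mod D2)%nat (t i).

Lemma model_in_span n (x t : nat -> R) (A1 A2 : R -> Prop) D1 D2 ph ps g d e :
  (forall i, (i < n)%nat -> A1 (x i) /\ A2 (t i)) -> in_tensor_span A1 A2 D1 D2 ph ps g ->
  (forall j, (j < D1 * D2)%nat -> in_span n d e (model_vec x t D2 ph ps j)) ->
  in_span n d e (fun i => g (x i) (t i)).
Proof.
  intros Hx [a Ha] Hc.
  apply (in_span_ext n d e (fun i => rsum D1 (fun k => rsum D2 (fun l => a k l * (ph k (x i) * ps l (t i)))))).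
  { intros i Hi. destruct (Hx i Hi). rewrite Ha by auto. apply rsum_ext; intros; apply rsum_ext; intros; ring. }
  apply in_span_rsum; intros k Hk. apply in_span_rsum; intros l Hl. apply in_span_scal.
  apply (in_span_ext n d e (model_vec x t D2 ph ps (k * D2 + l))).
  { intros i _. unfold model_vec.
    replace ((k * D2 + l) / D2)%nat with k by (apply (Nat.div_unique _ _ _ l); lia).
    replace ((k * D2 + l) mod D2)%nat with l by (apply (Nat.mod_unique _ _ k); lia). auto. }
  apply Hc. nia.
Qed.

Lemma model_trivial n (x t : nat -> R) (A1 A2 : R -> Prop) D1 D2 ph ps g :
  (forall i, (i < n)%nat -> A1 (x i) /\ A2 (t i)) -> in_tensor_span A1 A2 D1 D2 ph ps g ->
  (D1 * D2 = 0)%nat -> forall i, (i < n)%nat -> g (x i) (t i) = 0.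
Proof.
  intros Hx [a Ha] H0 i Hi. destruct (Hx i Hi). rewrite Ha by auto.
  destruct (Nat.mul_eq_0 D1 D2) as [Hm _]. destruct (Hm H0) as [-> | ->].
  - simpl; auto.
  - rewrite (rsum_ext _ _ (fun _ => 0)), rsum_zero; auto.
Qed.

Definition onb_spec n N (v : nat -> nat -> R) (de : nat * (nat -> nat -> R)) : Prop :=
  (fst de <= N)%nat /\ orthonormal n (fst de) (snd de) /\ forall j, (j < N)%nat -> in_span n (fst de) (snd de) (v j).

Lemma onb_exists n N v : exists de, onb_spec n N v de.
Proof. destruct (gram_schmidt n N v) as [d [e H]]. exists (d, e). exact H. Qed.

Definition onb n N v : nat * (nat -> nat -> R) :=
  proj1_sig (constructive_indefinite_description _ (onb_exists n N v)).

Lemma onb_correct n N v : onb_spec n N v (onb n N v).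
Proof. unfold onb. apply proj2_sig. Qed.

(** Orthonormal basis of [S_m + S_m'] at the design, where [m] is the
    reference model (dimension [D1m * D2m]) and [m'] a candidate.  All
    candidates of dimension [0] share one basis, that of [S_m]. *)
Definition pair_basis n (x t : nat -> R) D1m D2m (phm psm : nat -> R -> R) D1a D2a (pha psa : nat -> R -> R)
  : nat * (nat -> nat -> R) :=
  if Nat.eqb (D1a * D2a) 0 then onb n (D1m * D2m) (model_vec x t D2m phm psm)
  else onb n (D1m * D2m + D1a * D2a) (fun j =>
    if Nat.ltb j (D1m * D2m) then model_vec x t D2m phm psm j
    else model_vec x t D2a pha psa (j - D1m * D2m)).

Lemma pair_basis_spec n (x t : nat -> R) (A1 A2 : R -> Prop) D1m D2m phm psm D1a D2a pha psa :
  (forall i, (i < n)%nat -> A1 (x i) /\ A2 (t i)) ->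
  let B := pair_basis n x t D1m D2m phm psm D1a D2a pha psa in
  (fst B <= D1m * D2m + D1a * D2a)%nat /\ orthonormal n (fst B) (snd B) /\
  (forall g, in_tensor_span A1 A2 D1m D2m phm psm g -> in_span n (fst B) (snd B) (fun i => g (x i) (t i))) /\
  (forall g, in_tensor_span A1 A2 D1a D2a pha psa g -> in_span n (fst B) (snd B) (fun i => g (x i) (t i))).
Proof.
  intros Hx B. unfold B, pair_basis. destruct (Nat.eqb_spec (D1a * D2a) 0) as [Hz|Hz].
  - destruct (onb_correct n (D1m * D2m) (model_vec x t D2m phm psm)) as [Hd [Ho Hc]].
    split; [lia|]. split; [auto|]. split.
    + intros g Hg. apply (model_in_span n x t A1 A2 D1m D2m phm psm); auto.
    + intros g Hg. apply (in_span_ext n _ _ (fun _ => 0)); [|apply in_span_zero].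
      intros i Hi. symmetry. apply (model_trivial n x t A1 A2 D1a D2a pha psa); auto.
  - set (Dm := (D1m * D2m)%nat).
    destruct (onb_correct n (Dm + D1a * D2a) (fun j => if Nat.ltb j Dm then model_vec x t D2m phm psm j
               else model_vec x t D2a pha psa (j - Dm))) as [Hd [Ho Hc]].
    split; [auto|]. split; [auto|]. split.
    + intros g Hg. apply (model_in_span n x t A1 A2 D1m D2m phm psm); auto.
      intros j Hj. specialize (Hc j ltac:(unfold Dm in *; lia)).
      replace (Nat.ltb j Dm) with true in Hc by (symmetry; apply Nat.ltb_lt; auto). auto.
    + intros g Hg. apply (model_in_span n x t A1 A2 D1a D2a pha psa); auto.
      intros j Hj. specialize (Hc (Dm + j)%nat ltac:(lia)).
      replace (Nat.ltb (Dm + j) Dm) with false in Hc by (symmetry; apply Nat.ltb_ge; lia).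
      replace (Dm + j - Dm)%nat with j in Hc by lia. auto.
Qed.

Lemma pair_basis_trivial n (x t : nat -> R) D1m D2m phm psm D1a D2a pha psa :
  (D1a * D2a = 0)%nat ->
  pair_basis n x t D1m D2m phm psm D1a D2a pha psa = onb n (D1m * D2m) (model_vec x t D2m phm psm).
Proof. intros Hz. unfold pair_basis. rewrite Hz. reflexivity. Qed.

Definition excess (n : nat) (p : nat -> R) (et : R) (B : nat * (nat -> nat -> R)) (D : nat) (dl : list bool) : R :=
  Rmax (proj_energy n p (fst B) (snd B) dl - (1 + et) * INR D / 4) 0.

(** Every list is covered by a list without repetitions (equality need not
    be decidable, so this is proved classically). *)
Lemma nodup_cover {A : Type} (L : list A) : exists l, NoDup l /\ forall x, In x L -> In x l.
Proof.
  induction L as [|a L [l [Hl Hc]]].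
  - exists nil; split; [constructor| intros; contradiction].
  - destruct (classic (In a l)).
    + exists l; split; auto. intros x [<-|Hx]; auto.
    + exists (a :: l); split; [constructor; auto|]. intros x [<-|Hx]; [left; auto| right; auto].
Qed.

Lemma le_double_lsum {A B} (l1 : list A) (l2 : list B) (f : A -> B -> R) a b :
  (forall a b, 0 <= f a b) -> In a l1 -> In b l2 -> f a b <= lsum l1 (fun a => lsum l2 (f a)).
Proof.
  intros Hf Ha Hb. eapply Rle_trans; [apply (lsum_le_term l2 (f a) b); auto|].
  apply (lsum_le_term l1 (fun a => lsum l2 (f a)) a); auto. intros; apply lsum_nonneg; auto.
Qed.

Lemma sqrt_prod_bound (D1 D2 Dm : nat) : (1 <= D1)%nat -> (1 <= D2)%nat ->
  (sqrt (INR D1) + sqrt (INR D2)) / 2 <= sqrt (INR (Dm + D1 * D2)).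
Proof.
  intros H1 H2. assert (1 <= INR D1) by (apply (le_INR 1); auto). assert (1 <= INR D2) by (apply (le_INR 1); auto).
  assert (HS : sqrt (INR D1) * sqrt (INR D2) <= sqrt (INR (Dm + D1 * D2))).
  { rewrite <- sqrt_mult by lra. apply sqrt_le_1_alt. rewrite plus_INR, mult_INR. pose proof (pos_INR Dm). lra. }
  assert (1 <= sqrt (INR D1)) by (rewrite <- sqrt_1; apply sqrt_le_1_alt; lra).
  assert (1 <= sqrt (INR D2)) by (rewrite <- sqrt_1; apply sqrt_le_1_alt; lra).
  nra.
Qed.

(** Expected excess of a fixed pair of models of nonzero dimensions: it
    decays like a product of [exp (- c/2 sqrt D_j)], as summed in (H). *)
Lemma excess_pair_bound n p et (Dm D1 D2 : nat) (B : nat * (nat -> nat -> R)) :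
  0 < et -> probs p -> (1 <= D1)%nat -> (1 <= D2)%nat ->
  (fst B <= Dm + D1 * D2)%nat -> orthonormal n (fst B) (snd B) ->
  cond_exp n p (excess n p et B (Dm + D1 * D2)) <=
  tail_const et * (exp (- (tail_rate et / 2) * sqrt (INR D1)) * exp (- (tail_rate et / 2) * sqrt (INR D2))).
Proof.
  intros Het Hp H1 H2 Hd Ho. pose proof (tail_rate_pos et Het). pose proof (tail_const_pos et Het).
  eapply Rle_trans; [apply excess_tail; auto|]. apply Rmult_le_compat_l; [lra|].
  rewrite <- exp_plus. apply exp_le.
  pose proof (sqrt_prod_bound D1 D2 Dm H1 H2). nra.
Qed.

(** Whatever the selection
    rule, the excess of the selected pair is at most the sum of the excesses
    of all pairs of nonzero dimension, plus the (common) excess of the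
    zero-dimensional ones; by [excess_tail] and assumption (H) this sum has
    bounded expectation. *)
Lemma selected_excess_bound {I1 I2 : Type} n p et (D1 : I1 -> nat) (D2 : I2 -> nat) (B1 B2 : R -> R) Dm
  (basis : I1 -> I2 -> nat * (nat -> nat -> R)) (basis0 : nat * (nat -> nat -> R)) (sel : list bool -> I1 * I2) :
  0 < et -> probs p -> assumption_H I1 D1 B1 -> assumption_H I2 D2 B2 ->
  (forall a b, (fst (basis a b) <= Dm + D1 a * D2 b)%nat /\ orthonormal n (fst (basis a b)) (snd (basis a b))) ->
  (fst basis0 <= Dm)%nat -> orthonormal n (fst basis0) (snd basis0) ->
  (forall a b, (D1 a * D2 b = 0)%nat -> basis a b = basis0) ->
  cond_exp n p (fun dl => excess n p et (basis (fst (sel dl)) (snd (sel dl)))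
                              (Dm + D1 (fst (sel dl)) * D2 (snd (sel dl))) dl)
  <= tail_const et * (1 + Rabs (B1 (tail_rate et / 2)) * Rabs (B2 (tail_rate et / 2))).
Proof.
  intros Het Hp HH1 HH2 Hbasis Hd0 Ho0 Hzero.
  set (K := tail_const et). set (c := tail_rate et).
  assert (HK : 0 < K) by (apply tail_const_pos; auto). assert (Hc : 0 < c / 2) by (pose proof (tail_rate_pos et Het); unfold c; lra).
  destruct (nodup_cover (map (fun dl => fst (sel dl)) (all_bools n))) as [l1 [Hl1 Hc1]].
  destruct (nodup_cover (map (fun dl => snd (sel dl)) (all_bools n))) as [l2 [Hl2 Hc2]].
  set (Rv := fun a b dl => if andb (Nat.leb 1 (D1 a)) (Nat.leb 1 (D2 b)) then excess n p et (basis a b) (Dm + D1 a * D2 b) dl else 0).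
  assert (HRv : forall a b dl, 0 <= Rv a b dl) by (intros; unfold Rv, excess; destruct (andb _ _); [apply Rmax_r| lra]).
  apply Rle_trans with (cond_exp n p (fun dl => excess n p et basis0 Dm dl + lsum l1 (fun a => lsum l2 (fun b => Rv a b dl)))).
  { apply ce_le_in; auto. intros dl Hin. set (a := fst (sel dl)). set (b := snd (sel dl)).
    assert (0 <= excess n p et basis0 Dm dl) by apply Rmax_r.
    destruct (Nat.eq_dec (D1 a * D2 b) 0) as [Hz|Hz].
    - rewrite Hz, Hzero, Nat.add_0_r by auto.
      pose proof (lsum_nonneg l1 (fun a => lsum l2 (fun b => Rv a b dl)) ltac:(intros; apply lsum_nonneg; auto)). lra.
    - replace (excess n p et (basis a b) (Dm + D1 a * D2 b) dl) with (Rv a b dl)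
        by (unfold Rv; replace (andb _ _) with true by (symmetry; apply andb_true_intro; split; apply Nat.leb_le; nia); auto).
      pose proof (le_double_lsum l1 l2 (fun a b => Rv a b dl) a b (fun a b => HRv a b dl)
        (Hc1 _ (in_map (fun dl => fst (sel dl)) _ _ Hin)) (Hc2 _ (in_map (fun dl => snd (sel dl)) _ _ Hin))).
      lra. }
  rewrite ce_plus, ce_lsum.
  set (ea := fun a => exp (- (c / 2) * sqrt (INR (D1 a)))). set (eb := fun b => exp (- (c / 2) * sqrt (INR (D2 b)))).
  assert (E0 : cond_exp n p (excess n p et basis0 Dm) <= K).
  { eapply Rle_trans; [apply excess_tail; auto|].
    assert (exp (- c * sqrt (INR Dm)) <= 1) by (rewrite <- exp_0; apply exp_le; pose proof (sqrt_pos (INR Dm)); nra).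
    fold K c. nra. }
  assert (E1 : forall a b, cond_exp n p (Rv a b) <= K * (ea a * eb b)).
  { intros a b. unfold Rv. destruct (Nat.leb 1 (D1 a) && Nat.leb 1 (D2 b))%bool eqn:Hab.
    2: { rewrite ce_const. apply Rmult_le_pos; [lra| apply Rmult_le_pos; left; apply exp_pos]. }
    apply andb_prop in Hab. destruct Hab as [Ha Hb]. apply Nat.leb_le in Ha, Hb.
    destruct (Hbasis a b) as [Hd Ho]. apply excess_pair_bound; auto. }
  assert (Hs1 : 0 <= lsum l1 ea <= Rabs (B1 (c / 2))).
  { split; [apply lsum_nonneg; intros; left; apply exp_pos|].
    eapply Rle_trans; [apply (HH1 (c / 2) Hc l1 Hl1)| apply Rle_abs]. }
  assert (Hs2 : 0 <= lsum l2 eb <= Rabs (B2 (c / 2))).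
  { split; [apply lsum_nonneg; intros; left; apply exp_pos|].
    eapply Rle_trans; [apply (HH2 (c / 2) Hc l2 Hl2)| apply Rle_abs]. }
  assert (E2 : lsum l1 (fun a => cond_exp n p (fun dl => lsum l2 (fun b => Rv a b dl))) <= K * (lsum l1 ea * lsum l2 eb)).
  { rewrite <- lsum_prod, <- lsum_scal. apply lsum_le; intros a.
    rewrite ce_lsum, <- lsum_scal. apply lsum_le; intros b. apply E1. }
  assert (lsum l1 ea * lsum l2 eb <= Rabs (B1 (c / 2)) * Rabs (B2 (c / 2))) by (apply Rmult_le_compat; lra).
  nra.
Qed.

Lemma clip01_contraction a b : 0 <= b <= 1 -> (clip01 a - b) ^ 2 <= (a - b) ^ 2.
Proof.
  intros Hb. unfold clip01, Rmin, Rmax.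
  destruct (Rle_dec a 0); destruct (Rle_dec 0 1); try lra; destruct (Rle_dec a 1); nra.
Qed.

Lemma risk_bound_outcome n (x t : nat -> R) (F Fh g : R -> R -> R) dl (B : nat * (nat -> nat -> R))
    th et al be (Dm Dmh : nat) :
  (1 <= n)%nat -> probs (fun i => F (x i) (t i)) -> orthonormal n (fst B) (snd B) ->
  in_span n (fst B) (snd B) (fun i => Fh (x i) (t i)) -> in_span n (fst B) (snd B) (fun i => g (x i) (t i)) ->
  0 < al -> 0 < be -> (1 + et) / al = th -> 0 < 1 - al * (1 + be) ->
  gamma_n n x t dl Fh + th / 4 * INR Dmh / INR n <= gamma_n n x t dl g + th / 4 * INR Dm / INR n ->
  emp_norm2 n x t (fun u v => clip01 (Fh u v) - F u v) <=
    / INR n * / (1 - al * (1 + be)) *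
      ((1 + al * (1 + / be)) * rsum n (fun i => (F (x i) (t i) - g (x i) (t i)) ^ 2) + th * INR Dm / 2)
    + / INR n * / (1 - al * (1 + be)) * / al * excess n (fun i => F (x i) (t i)) et B (Dm + Dmh) dl.
Proof.
  intros Hn Hp Ho HFh Hg Hal Hbe Hth Hka Hsel.
  set (ka := 1 - al * (1 + be)). fold ka in Hka.
  assert (HnR : 0 < INR n) by (apply lt_0_INR; lia).
  assert (Hsel' : rsum n (fun i => (delta dl i - Fh (x i) (t i)) ^ 2) + th / 4 * INR Dmh <=
                  rsum n (fun i => (delta dl i - g (x i) (t i)) ^ 2) + th / 4 * INR Dm).
  { unfold gamma_n in Hsel. apply (Rmult_le_compat_l (INR n)) in Hsel; [|lra].
    replace (INR n * (/ INR n * rsum n (fun i => (delta dl i - Fh (x i) (t i)) ^ 2) + th / 4 * INR Dmh / INR n))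
      with (rsum n (fun i => (delta dl i - Fh (x i) (t i)) ^ 2) + th / 4 * INR Dmh) in Hsel by (field; lra).
    replace (INR n * (/ INR n * rsum n (fun i => (delta dl i - g (x i) (t i)) ^ 2) + th / 4 * INR Dm / INR n))
      with (rsum n (fun i => (delta dl i - g (x i) (t i)) ^ 2) + th / 4 * INR Dm) in Hsel by (field; lra).
    exact Hsel. }
  assert (Hdiff : in_span n (fst B) (snd B) (fun i => Fh (x i) (t i) - g (x i) (t i))).
  { apply (in_span_ext n _ _ (fun i => Fh (x i) (t i) + (-1) * g (x i) (t i))); [intros; ring|].
    apply in_span_plus, in_span_scal; auto. }
  pose proof (oracle_deterministic n (fun i => F (x i) (t i)) (fun i => Fh (x i) (t i)) (fun i => g (x i) (t i))
    (delta dl) (fst B) (snd B) al be th et (INR Dm) (INR Dmh) Ho Hdiff Hal Hbe Hth Hsel') as Hdet.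
  fold ka in Hdet. rewrite <- plus_INR in Hdet.
  change (Rmax (rsum (fst B) (fun k => (rsum n (fun i => snd B k i * (delta dl i - F (x i) (t i)))) ^ 2)
            - (1 + et) * INR (Dm + Dmh) / 4) 0) with (excess n (fun i => F (x i) (t i)) et B (Dm + Dmh) dl) in Hdet.
  assert (Hclip : rsum n (fun i => (clip01 (Fh (x i) (t i)) - F (x i) (t i)) ^ 2)
                  <= rsum n (fun i => (Fh (x i) (t i) - F (x i) (t i)) ^ 2))
    by (apply rsum_le; intros i _; apply clip01_contraction, Hp).
  unfold emp_norm2. rewrite !Rmult_assoc, <- Rmult_plus_distr_l.
  apply Rmult_le_compat_l; [left; apply Rinv_0_lt_compat; auto|].
  apply (Rmult_le_reg_l ka); auto.
  replace (ka * (/ ka * ((1 + al * (1 + / be)) * rsum n (fun i => (F (x i) (t i) - g (x i) (t i)) ^ 2)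
      + th * INR Dm / 2) + / ka * (/ al * excess n (fun i => F (x i) (t i)) et B (Dm + Dmh) dl)))
    with ((1 + al * (1 + / be)) * rsum n (fun i => (F (x i) (t i) - g (x i) (t i)) ^ 2)
      + th * INR Dm / 2 + / al * excess n (fun i => F (x i) (t i)) et B (Dm + Dmh) dl) by (field; lra).
  nra.
Qed.

Definition oi_eta (th : R) : R := (th - 1) / 2.
Definition oi_alpha (th : R) : R := (1 + th) / (2 * th).
Definition oi_beta (th : R) : R := (th - 1) / (2 * (1 + th)).
Definition oi_kappa (th : R) : R := 1 - oi_alpha th * (1 + oi_beta th).
Definition oi_A (th : R) : R := 1 + oi_alpha th * (1 + / oi_beta th).

Lemma oi_params th : 1 < th ->
  0 < oi_eta th /\ 0 < oi_alpha th /\ 0 < oi_beta th /\ 0 < oi_kappa th /\ 0 <= oi_A th /\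
  (1 + oi_eta th) / oi_alpha th = th.
Proof.
  intros Hth. unfold oi_kappa, oi_A, oi_eta, oi_alpha, oi_beta.
  assert (Hal : 0 < (1 + th) / (2 * th)) by (apply Rdiv_lt_0_compat; lra).
  assert (Hbe : 0 < (th - 1) / (2 * (1 + th))) by (apply Rdiv_lt_0_compat; lra).
  assert (0 < / ((th - 1) / (2 * (1 + th)))) by (apply Rinv_0_lt_compat; auto).
  repeat split; try lra; try nra.
  - replace (1 - (1 + th) / (2 * th) * (1 + (th - 1) / (2 * (1 + th)))) with ((th - 1) / (4 * th)) by (field; lra).
    apply Rdiv_lt_0_compat; lra.
  - field; lra.
Qed.

Definition C1_of (th : R) : R := (oi_A th + 2) / oi_kappa th.

Definition C2_of (th : R) (B1 B2 : R -> R) : R :=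
  tail_const (oi_eta th) * (1 + Rabs (B1 (tail_rate (oi_eta th) / 2)) * Rabs (B2 (tail_rate (oi_eta th) / 2)))
  / (oi_kappa th * oi_alpha th).

Lemma C1_C2_pos th B1 B2 : 1 < th -> 0 < C1_of th /\ 0 < C2_of th B1 B2.
Proof.
  intros Hth. destruct (oi_params th Hth) as [Het [Hal [_ [Hka [HA _]]]]].
  pose proof (tail_const_pos _ Het). unfold C1_of, C2_of. split; [apply Rdiv_lt_0_compat; lra|].
  apply Rdiv_lt_0_compat; [| nra].
  apply Rmult_lt_0_compat; [lra|].
  pose proof (Rmult_le_pos _ _ (Rabs_pos (B1 (tail_rate (oi_eta th) / 2))) (Rabs_pos (B2 (tail_rate (oi_eta th) / 2)))).
  lra.
Qed.

Lemma oracle_arith nR Q Dm Am ka al th Kb E :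
  0 < nR -> 0 <= Q -> 0 <= Am -> 0 < ka -> 0 < al -> 0 < th -> 0 <= Dm -> E <= Kb ->
  / nR * / ka * (Am * Q + th * Dm / 2) + / nR * / ka * / al * E <=
  (Am + 2) / ka * (/ nR * Q + th / 4 * Dm / nR) + Kb / (ka * al) / nR.
Proof.
  intros Hn HQ HAm Hka Hal Hth HDm HE.
  assert (0 < / nR * / ka * / al) by (repeat apply Rmult_lt_0_compat; apply Rinv_0_lt_compat; auto).
  assert (Kb / (ka * al) / nR = / nR * / ka * / al * Kb) by (field; lra).
  assert ((Am + 2) / ka * (/ nR * Q + th / 4 * Dm / nR) =
          / nR * / ka * (Am * Q + th * Dm / 2) + / nR * / ka * (2 * Q + Am * th / 4 * Dm)) by (field; lra).
  assert (0 <= / nR * / ka * (2 * Q + Am * th / 4 * Dm)).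
  { apply Rmult_le_pos; [left; apply Rmult_lt_0_compat; apply Rinv_0_lt_compat; auto|].
    assert (0 <= Am * th / 4 * Dm) by (apply Rmult_le_pos; [apply Rmult_le_pos; [apply Rmult_le_pos|]|]; lra). lra. }
  nra.
Qed.

Theorem theorem1 :
  forall (theta : R), 1 < theta ->
  forall (B1 B2 : R -> R),
  exists C1 C2 : R, 0 < C1 /\ 0 < C2 /\
  forall (n : nat), (1 <= n)%nat ->
  forall (a1 b1 a2 b2 : R), a1 <= b1 -> 0 < a2 -> a2 <= b2 ->
  let A1 := fun u => a1 <= u <= b1 in
  let A2 := fun v => a2 <= v <= b2 in
  forall (I1 I2 : Type) (D1 : I1 -> nat) (D2 : I2 -> nat)
         (phi : I1 -> nat -> R -> R) (psi : I2 -> nat -> R -> R),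
  (forall m1, lin_indep_on A1 (D1 m1) (phi m1)) ->
  (forall m2, lin_indep_on A2 (D2 m2) (psi m2)) ->
  assumption_H I1 D1 B1 -> assumption_H I2 D2 B2 ->
  let S := fun (m1 : I1) (m2 : I2) (g : R -> R -> R) =>
             in_tensor_span A1 A2 (D1 m1) (D2 m2) (phi m1) (psi m2) g in
  let pen := fun (m1 : I1) (m2 : I2) =>
             theta / 4 * INR (D1 m1 * D2 m2) / INR n in
  forall (x t : nat -> R),
  (forall i, (i < n)%nat -> A1 (x i) /\ A2 (t i)) ->
  forall (F : R -> R -> R), cond_cdf F ->
  forall (Fhat : I1 -> I2 -> list bool -> R -> R -> R),
  (forall m1 m2 d, S m1 m2 (Fhat m1 m2 d) /\
     forall g, S m1 m2 g -> gamma_n n x t d (Fhat m1 m2 d) <= gamma_n n x t d g) ->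
  forall (mhat : list bool -> I1 * I2),
  (forall d m1 m2,
     gamma_n n x t d (Fhat (fst (mhat d)) (snd (mhat d)) d)
       + pen (fst (mhat d)) (snd (mhat d))
     <= gamma_n n x t d (Fhat m1 m2 d) + pen m1 m2) ->
  forall (m1 : I1) (m2 : I2) (g : R -> R -> R), S m1 m2 g ->
    cond_exp n (fun i => F (x i) (t i))
      (fun d => emp_norm2 n x t
         (fun u v => clip01 (Fhat (fst (mhat d)) (snd (mhat d)) d u v) - F u v))
    <= C1 * (emp_norm2 n x t (fun u v => F u v - g u v) + pen m1 m2) + C2 / INR n.
Proof.
  intros th Hth B1 B2. destruct (C1_C2_pos th B1 B2 Hth) as [HC1 HC2].
  exists (C1_of th), (C2_of th B1 B2). split; [exact HC1| split; [exact HC2|]].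
  intros n Hn a1 b1 a2 b2 _ _ _ A1 A2 I1 I2 D1 D2 phi psi _ _ HH1 HH2 S pen x t Hx F HF Fhat HFhat mhat Hmhat m1 m2 g Hg.
  destruct (oi_params th Hth) as [Het [Hal [Hbe [Hka [HA Hth']]]]].
  set (p := fun i => F (x i) (t i)). assert (Hp : probs p) by (intros i; apply (HF (x i))).
  set (Dm := (D1 m1 * D2 m2)%nat).
  set (basis := fun a b => pair_basis n x t (D1 m1) (D2 m2) (phi m1) (psi m2) (D1 a) (D2 b) (phi a) (psi b)).
  (* the risk bound holds for every outcome, with the basis of the selected pair *)
  assert (Hout : forall dl, let a := fst (mhat dl) in let b := snd (mhat dl) in
    emp_norm2 n x t (fun u v => clip01 (Fhat a b dl u v) - F u v) <=
      / INR n * / oi_kappa th * (oi_A th * rsum n (fun i => (p i - g (x i) (t i)) ^ 2) + th * INR Dm / 2)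
      + / INR n * / oi_kappa th * / oi_alpha th * excess n p (oi_eta th) (basis a b) (Dm + D1 a * D2 b) dl).
  { intros dl a b. destruct (pair_basis_spec n x t A1 A2 (D1 m1) (D2 m2) (phi m1) (psi m2)
      (D1 a) (D2 b) (phi a) (psi b) Hx) as [_ [Ho [Hinm Hina]]].
    pose proof (Hina _ (proj1 (HFhat a b dl))). pose proof (Hinm g Hg).
    assert (Hsel : gamma_n n x t dl (Fhat a b dl) + pen a b <= gamma_n n x t dl g + pen m1 m2).
    { eapply Rle_trans; [apply (Hmhat dl m1 m2)|]. apply Rplus_le_compat_r, HFhat, Hg. }
    apply risk_bound_outcome; auto. }
  eapply Rle_trans; [apply ce_le; [exact Hp| exact Hout]|].
  rewrite ce_plus, ce_const, ce_scal.
  assert (Hexcess := selected_excess_bound n p (oi_eta th) D1 D2 B1 B2 Dm basis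
    (onb n Dm (model_vec x t (D2 m2) (phi m1) (psi m2))) mhat Het Hp HH1 HH2
    (fun a b => let H := pair_basis_spec n x t A1 A2 (D1 m1) (D2 m2) (phi m1) (psi m2) (D1 a) (D2 b) (phi a) (psi b) Hx
                in conj (proj1 H) (proj1 (proj2 H)))).
  apply oracle_arith; auto.
  - apply lt_0_INR; lia.
  - apply rsum_nonneg; intros; apply pow2_ge_0.
  - lra.
  - apply pos_INR.
  - apply Hexcess; try apply onb_correct. intros a b Hz. apply pair_basis_trivial; auto.
Qed.
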